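(* Let $M$ be a matroid on $E=[n]$, $t,u$ positive integers, $\mathcal F$ the regular mixed subdivision defined below, and let $\mathcal P$ be the poset whose elements are the top-degree faces of $\mathcal F$ together with all nonempty intersections of sets of top-degree faces, ordered by inclusion. Let $[S_1,T_1],\dots,[S_p,T_p]$ be the Dawson partition of $M$. Then $\mathcal P$ is a disjoint union of face posets of cubes $C_1,\dots,C_p$, where the vertices of $C_i$ are the top-degree faces $u\Delta_X+\mathbf e_B+t\nabla_Y$ with $X\in[S_i,T_i]$.
   Context: $M$ is a matroid on $E=[n]=\{1,\dots,n\}$ with the natural order. $P(M)\subseteq\mathbb R^E$ is the convex hull of the indicator vectors $\mathbf e_B$ of bases. For nonempty $S\subseteq E$, $\Delta_S=\operatorname{conv}\{\mathbf e_i:i\in S\}$, $\nabla_S=-\Delta_S$, $\Delta=\Delta_E$, $\nabla=\nabla_E$. Subdivision: fix reals $0<\alpha_1<\dots<\alpha_n$, $0<\beta_1<\dots<\beta_n$; $\mathit{Lift}=\operatorname{conv}\{(u\mathbf e_i,\alpha_i)\}+(P(M)\times\{0\})+\operatorname{conv}\{(-t\mathbf e_i,\beta_i)\}\subseteq\mathbb R^E\times\mathbb R$; lower faces are faces on which some linear functional with last coordinate $-1$ attains its maximum; their projections form the regular mixed subdivision $\mathcal F$ of $u\Delta+P(M)+t\nabla$, each cell canonically $F+G+H$ with $F$ a face of $u\Delta$, $G$ of $P(M)$, $H$ of $t\nabla$. A top-degree face is a maximal cell with $G$ a vertex of $P(M)$; these are exactly of the form $u\Delta_X+\mathbf e_B+t\nabla_Y$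 with $X\cup Y=E$, $X\cap Y=\{1\}$. Activity: a transfer from $a$ to $b$ is possible in $\mathbf e_B$ if $\mathbf e_B-\mathbf e_a+\mathbf e_b\in P(M)$; $a$ is internally active if no transfer from $a$ to a smaller element is possible, externally active if no transfer to $a$ from a smaller element is possible; $\mathrm{Int}(B)$, $\mathrm{Ext}(B)$ are the sets of internally/externally active elements. The Dawson partition of $M$ is the partition of the power set of $E$ into the Boolean intervals $[B\setminus\mathrm{Int}(B),\,B\cup\mathrm{Ext}(B)]$, $B$ ranging over bases. *)

From HB Require Import structures.
From mathcomp Require Import all_boot all_order all_algebra.
Set Implicit Arguments.
Unset Strict Implicit.
Unset Printing Implicit Defensive.
Import Order.TTheory GRing.Theory Num.Theory.
Local Open Scope ring_scope.

Section Defs.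
Variables (R : realFieldType) (n : nat).
Notation V := 'rV[R]_n.

(* E = [n] is modelled by 'I_n; the element k of [n] is the ordinal k-1,
   so the natural order is the order of ordinals and "1" is the ordinal 0. *)

Definition matroid_bases (BB : {set {set 'I_n}}) : Prop :=
  BB != set0 /\
  forall B1 B2, B1 \in BB -> B2 \in BB -> forall a, a \in B1 :\: B2 ->
    exists2 b, b \in B2 :\: B1 & b |: (B1 :\ a) \in BB.

Definition ev (i : 'I_n) : V := \row_j (i == j)%:R.
Definition eS (S : {set 'I_n}) : V := \sum_(i in S) ev i.

Definition dot (w x : V) : R := \sum_j w 0 j * x 0 j.

Definition conv_on (I : finType) (A : {set I}) (f : I -> V) (x : V) : Prop :=
  exists l : I -> R, [/\ forall i, 0 <= l i, forall i, i \notin A -> l i = 0,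
     \sum_i l i = 1 & x = \sum_i l i *: f i].

Definition msum (P Q : V -> Prop) (x : V) : Prop :=
  exists p q, [/\ P p, Q q & x = p + q].
Definition dil (c : R) (P : V -> Prop) (x : V) : Prop :=
  exists2 p, P p & x = c *: p.

Definition PM (BB : {set {set 'I_n}}) : V -> Prop := conv_on BB eS.
Definition Delta (S : {set 'I_n}) : V -> Prop := conv_on S ev.
Definition Nabla (S : {set 'I_n}) : V -> Prop := conv_on S (fun i => - ev i).

(** the lifted polytope
   Lift = conv{(u e_i, alpha_i)} + P(M) x {0} + conv{(-t e_i, beta_i)}
   in R^E x R, represented as a predicate on pairs (x, h). *)
Definition Lift (BB : {set {set 'I_n}}) (alpha beta : 'I_n -> R) (u t : R)
    (z : V * R) : Prop :=
  exists a b : 'I_n -> R, exists2 g, PM BB g &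
    [/\ (forall i, 0 <= a i) /\ \sum_i a i = 1, (forall i, 0 <= b i) /\ \sum_i b i = 1,
        z.1 = \sum_i a i *: (u *: ev i) + g + \sum_i b i *: (- (t *: ev i)) &
        z.2 = \sum_i a i * alpha i + \sum_i b i * beta i].

Definition lfun (w : V) (z : V * R) : R := dot w z.1 - z.2.

Definition lower_set (BB : {set {set 'I_n}}) (alpha beta : 'I_n -> R) (u t : R) (w : V) (z : V * R) : Prop :=
  Lift BB alpha beta u t z /\
  forall z', Lift BB alpha beta u t z' -> lfun w z' <= lfun w z.

Definition cell_by (BB : {set {set 'I_n}}) (alpha beta : 'I_n -> R) (u t : R) (w : V) (C : V -> Prop) : Prop :=
  (exists z, lower_set BB alpha beta u t w z) /\
  forall x, C x <-> exists h, lower_set BB alpha beta u t w (x, h).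

Definition cell (BB : {set {set 'I_n}}) (alpha beta : 'I_n -> R) (u t : R) (C : V -> Prop) : Prop :=
  exists w, cell_by BB alpha beta u t w C.

(** the P(M)-summand G of the canonical decomposition of the cell selected by w *)
Definition Gpart (BB : {set {set 'I_n}}) (w : V) (g : V) : Prop :=
  PM BB g /\ forall g', PM BB g' -> dot w g' <= dot w g.

Definition subset_pts (P Q : V -> Prop) : Prop := forall x, P x -> Q x.

(** top-degree faces: maximal cells whose P(M)-summand is a vertex (a point) *)
Definition top_face (BB : {set {set 'I_n}}) (alpha beta : 'I_n -> R) (u t : R) (C : V -> Prop) : Prop :=
  cell BB alpha beta u t C /\
  (forall C', cell BB alpha beta u t C' -> subset_pts C C' -> subset_pts C' C) /\
  exists w, cell_by BB alpha beta u t w C /\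
    exists g, forall g', Gpart BB w g' <-> g' = g.

Definition in_P (BB : {set {set 'I_n}}) (alpha beta : 'I_n -> R) (u t : R) (Q : V -> Prop) : Prop :=
  (exists fam : (V -> Prop) -> Prop,
     [/\ exists Q0, fam Q0,
         forall Q0, fam Q0 -> top_face BB alpha beta u t Q0 &
         forall x, Q x <-> (forall Q0, fam Q0 -> Q0 x)]) /\
  exists x, Q x.

Definition sum_form (u t : R) (X B Y : {set 'I_n}) : V -> Prop :=
  msum (msum (dil u (Delta X)) (fun x => x = eS B)) (dil t (Nabla Y)).

Definition labelled (BB : {set {set 'I_n}}) (u t : R) (Q : V -> Prop) (X : {set 'I_n}) : Prop :=
  exists B Y, [/\ B \in BB, X :|: Y = setT, X :&: Y = [set i | val i == 0%N] &
    forall x, Q x <-> sum_form u t X B Y x].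

Definition transfer (BB : {set {set 'I_n}}) (B : {set 'I_n}) (a b : 'I_n) : Prop :=
  PM BB (eS B - ev a + ev b).
Definition int_active (BB : {set {set 'I_n}}) (B : {set 'I_n}) (a : 'I_n) : Prop :=
  ~ exists b : 'I_n, (b < a)%N /\ transfer BB B a b.
Definition ext_active (BB : {set {set 'I_n}}) (B : {set 'I_n}) (a : 'I_n) : Prop :=
  ~ exists b : 'I_n, (b < a)%N /\ transfer BB B b a.

(** X lies in the Dawson interval [B \ Int(B), B cup Ext(B)] *)
Definition in_dawson (BB : {set {set 'I_n}}) (B X : {set 'I_n}) : Prop :=
  (forall i, i \in B -> ~ int_active BB B i -> i \in X) /\
  (forall i, i \in X -> i \in B \/ ext_active BB B i).

End Defs.

(** combinatorial cube of dimension d: faces are maps 'I_d -> option bool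
    (None = free coordinate); vertices are the faces with no free coordinate *)
Definition cube_vertex d (f : {ffun 'I_d -> option bool}) : Prop :=
  forall k, f k <> None.
(** vertex set of face f is contained in vertex set of face g *)
Definition cube_face_sub d (f g : {ffun 'I_d -> option bool}) : Prop :=
  forall k, g k = None \/ g k = f k.
Arguments labelled {R n} BB u t Q X.
Arguments in_dawson R {n} BB B X.

From Pilot Require Import Defs.
From HB Require Import structures.
From mathcomp Require Import all_boot all_order all_algebra.
From mathcomp Require Import boolp lra zify ring.
From Stdlib Require Import Eqdep_dec.
Import Order.TTheory GRing.Theory Num.Theory.
Local Open Scope ring_scope.
Set Implicit Arguments.
Unset Strict Implicit.
Unset Printing Implicit Defensive.

(* For a weight w, the lower face of Lift selected by (w, -1) projects onto
   u Delta_A + G + t Nabla_C, where A and C are the indices maximising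
   u w_i - alpha_i and -t w_i - beta_i, and G is the face of P(M) maximised by w.
   If G is a vertex and either A + C <> E or A and C are disjoint, shifting w
   down on a suitable set of coordinates strictly enlarges the cell; so in a
   top-degree face A + C = E and A meets C exactly in 1. Up to a constant, w is
   then the weight wt X with X = A, whose coordinates are pairwise distinct
   because alpha and beta increase, and G = e_B for the unique wt X-maximal
   basis B. The greedy characterisation of that basis says exactly that X lies
   in the Dawson interval of B, and that B is the only basis with this property.
   A point common to several top faces has the same lifting height in all of
   them, so they share B and their intersection is u Delta_S + e_B + t Nabla_Y
   with S and T the meet and join of their labels and Y = (E \ T) + 1.
   Recording for each free element of the Dawson interval whether it lies in S,
   in T \ S or outside T identifies these intersections with the faces of a
   cube. *)

(** * Matroid bases and weights *)

Lemma setU1_setD1_swap (T : finType) (A B : {set T}) a x :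
  A :\: B = [set a] -> B :\: A = [set x] -> a |: (B :\ x) = A.
Proof.
move=> /setP eA /setP eB; apply/setP => v; move: (eA v) (eB v); rewrite !inE.
by case: (v == a); case: (v == x); case: (v \in A); case: (v \in B).
Qed.

Section MatroidBases.
Variables (R : realFieldType) (n : nat) (BB : {set {set 'I_n}}).
Hypothesis hM : matroid_bases BB.

Lemma basis_exchange (B1 B2 : {set 'I_n}) (a : 'I_n) :
  B1 \in BB -> B2 \in BB -> a \in B1 :\: B2 ->
  exists2 b, b \in B2 :\: B1 & b |: (B1 :\ a) \in BB.
Proof. by move=> h1 h2 ha; apply: hM.2. Qed.

Lemma card_basis_diff_sym (B1 B2 : {set 'I_n}) :
  B1 \in BB -> B2 \in BB -> #|B1 :\: B2| = #|B2 :\: B1|.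
Proof.
move ek: #|B1 :\: B2| => k; elim: k B1 B2 ek => [|k IH] B1 B2 ek h1 h2.
  apply/esym/eqP; rewrite cards_eq0; apply/eqP.
  case: (set_0Vmem (B2 :\: B1)) => [//|[x hx]].
  have [b hb _] := basis_exchange h2 h1 hx.
  by move: ek => /eqP; rewrite cards_eq0 => /eqP ek; rewrite ek inE in hb.
have : (0 < #|B1 :\: B2|)%N by rewrite ek.
rewrite card_gt0 => /set0Pn [a ha].
have [b hb hB] := basis_exchange h1 h2 ha.
move: (ha) (hb); rewrite !inE => /andP [naB2 aB1] /andP [nbB1 bB2].
have e1 : (b |: (B1 :\ a)) :\: B2 = (B1 :\: B2) :\ a.
  apply/setP=> x; rewrite !inE.
  have [->|nxb] := eqVneq x b; first by rewrite bB2 /= andbF.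
  by case: (x \in B1); case: (x \in B2); case: (x != a).
have e2 : B2 :\: (b |: (B1 :\ a)) = (B2 :\: B1) :\ b.
  apply/setP=> x; rewrite !inE.
  have [->|nxb] := eqVneq x b; first by [].
  have [->|nxa] := eqVneq x a; first by rewrite (negbTE naB2) /= ?andbF.
  by case: (x \in B1); case: (x \in B2).
have := IH _ _ _ hB h2; rewrite e1 e2.
have := cardsD1 a (B1 :\: B2); rewrite ha ek add1n => -[<-] /(_ erefl).
by have := cardsD1 b (B2 :\: B1); rewrite hb add1n => -> ->.
Qed.

Lemma card_basis_eq (B1 B2 : {set 'I_n}) : B1 \in BB -> B2 \in BB -> #|B1| = #|B2|.
Proof.
move=> h1 h2; rewrite -(cardsID B2 B1) -(cardsID B1 B2) setIC.
by rewrite (card_basis_diff_sym h1 h2).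
Qed.

Lemma dual_basis_exchange (B1 B2 : {set 'I_n}) (a : 'I_n) :
  B1 \in BB -> B2 \in BB -> a \in B1 :\: B2 ->
  exists2 x, x \in B2 :\: B1 & a |: (B2 :\ x) \in BB.
Proof.
move: {2}#|B2 :\: B1| (leqnn #|B2 :\: B1|) => k.
elim: k B1 B2 a => [|k IH] B1 B2 a hk h1 h2 ha.
  move: hk; rewrite leqn0 -(card_basis_diff_sym h1 h2) cards_eq0 => /eqP e.
  by rewrite e inE in ha.
move: (ha); rewrite inE => /andP [naB2 aB1].
case: (ltnP 1 #|B1 :\: B2|) => c1.
  have : (0 < #|(B1 :\: B2) :\ a|)%N by move: c1; rewrite (cardsD1 a) ha.
  rewrite card_gt0 => /set0Pn [y]; rewrite 3!inE => /andP [nya /andP [nyB2 yB1]].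
  have hy : y \in B1 :\: B2 by rewrite inE nyB2.
  have [z hz hB] := basis_exchange h1 h2 hy.
  move: (hz); rewrite inE => /andP [nzB1 zB2].
  have ha' : a \in (z |: (B1 :\ y)) :\: B2.
    by rewrite !inE naB2 aB1 (eq_sym a y) nya orbT.
  have hk' : (#|B2 :\: (z |: (B1 :\ y))| <= k)%N.
    have -> : B2 :\: (z |: (B1 :\ y)) = (B2 :\: B1) :\ z.
      apply/setP=> x; rewrite !inE.
      have [->|nxz] := eqVneq x z; first by [].
      have [->|nxy] := eqVneq x y; first by rewrite (negbTE nyB2) /= ?andbF.
      by case: (x \in B1); case: (x \in B2).
    by move: hk; rewrite (cardsD1 z (B2 :\: B1)) hz add1n ltnS.
  have [x hx hB'] := IH _ _ _ hk' hB h2 ha'.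
  exists x => //; move: hx; rewrite !inE => /andP [hxn xB2]; rewrite xB2 andbT.
  have nxy : x != y by apply/eqP => exy; rewrite -exy xB2 in nyB2.
  by move: hxn; rewrite nxy /=; case: (x == z); case: (x \in B1).
have /cards1P [x ex] : #|B2 :\: B1| == 1%N.
  by rewrite -(card_basis_diff_sym h1 h2) eqn_leq c1 card_gt0; apply/set0Pn; exists a.
have /cards1P [y ey] : #|B1 :\: B2| == 1%N.
  by rewrite (card_basis_diff_sym h1 h2) ex cards1.
exists x; first by rewrite ex set11.
have ay : a = y by move: ha; rewrite ey inE => /eqP.
by rewrite ay (setU1_setD1_swap ey ex) h1.
Qed.

Definition wsum (w : 'I_n -> R) (B : {set 'I_n}) : R := \sum_(i in B) w i.

Lemma wsum_exchange (w : 'I_n -> R) (B : {set 'I_n}) (a b : 'I_n) :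
  a \in B -> b \notin B -> wsum w (b |: (B :\ a)) = wsum w B - w a + w b.
Proof.
move=> aB nbB; rewrite /wsum big_setU1 /=; last by rewrite inE negb_and nbB orbT.
by rewrite (big_setD1 a aB) /= [w a + _]addrC addrK addrC.
Qed.

Definition max_basis (w : 'I_n -> R) (B0 : {set 'I_n}) :=
  B0 \in BB /\ forall B, B \in BB -> wsum w B <= wsum w B0.

Lemma max_basis_exchange (w : 'I_n -> R) (B0 : {set 'I_n}) (a b : 'I_n) :
  max_basis w B0 -> a \in B0 -> b \notin B0 -> b |: (B0 :\ a) \in BB -> w b <= w a.
Proof.
by move=> [h0 hm] aB nbB /hm; rewrite wsum_exchange // => h; lra.
Qed.

Lemma max_basis_uniq (w : 'I_n -> R) : injective w ->
  forall B1 B2, max_basis w B1 -> max_basis w B2 -> B1 = B2.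
Proof.
move=> winj.
suff H : forall B1 B2, max_basis w B1 -> max_basis w B2 -> forall e,
   e \in B1 :\: B2 -> (forall x, x \in B2 :\: B1 -> w x <= w e) -> False.
  move=> B1 B2 m1 m2; apply/eqP; apply/negPn/negP => ne.
  have : (B1 :\: B2) :|: (B2 :\: B1) != set0.
    apply: contra ne; rewrite setU_eq0 !setD_eq0 => /andP [a b]; apply/eqP/setP.
    by apply/subset_eqP; rewrite a b.
  case/set0Pn => e0 he0.
  case: (@arg_maxP _ R _ e0 (fun x => x \in (B1 :\: B2) :|: (B2 :\: B1)) w he0) => e.
  move=> he1 hmax; move: he1; rewrite in_setU => /orP [] he.
    by apply: (H _ _ m1 m2 e he) => x hx; apply: hmax; rewrite in_setU hx orbT.
  by apply: (H _ _ m2 m1 e he) => x hx; apply: hmax; rewrite in_setU hx.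
move=> B1 B2 m1 m2 e he hmax.
have [x hx hB] := dual_basis_exchange m1.1 m2.1 he.
move: (hx) (he); rewrite !inE => /andP [nxB1 xB2] /andP [neB2 eB1].
have le := max_basis_exchange m2 xB2 neB2 hB.
have : w x = w e by apply/le_anti; rewrite (hmax x hx) le.
by move/winj => exe; rewrite exe eB1 in nxB1.
Qed.

End MatroidBases.

(** * The base polytope *)

Section ConvexCombinations.
Variable R : realFieldType.

Definition delta (I : finType) (k : I) : I -> R := fun i => (i == k)%:R.

Lemma sum_delta (I : finType) (F : I -> R) (k : I) : \sum_i delta k i * F i = F k.
Proof.
rewrite (bigD1 k) //= /delta eqxx mul1r big1 ?addr0 // => i /negbTE ->.
by rewrite mul0r.
Qed.

Lemma sum_delta_scale (W : lmodType R) (I : finType) (F : I -> W) (k : I) :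
  \sum_i delta k i *: F i = F k.
Proof.
rewrite (bigD1 k) //= /delta eqxx scale1r big1 ?addr0 // => i /negbTE ->.
by rewrite scale0r.
Qed.

Definition distr (I : finType) (a : I -> R) (A : {set I}) :=
  [/\ forall i, 0 <= a i, forall i, i \notin A -> a i = 0 & \sum_i a i = 1].

Lemma distr_delta (I : finType) (k : I) (A : {set I}) : k \in A -> distr (delta k) A.
Proof.
move=> kA; split=> [i|i iA|]; rewrite /delta.
- by case: (i == k).
- by case: eqP iA => // ->; rewrite kA.
- by rewrite (bigD1 k) //= eqxx big1 ?addr0 // => i /negbTE ->.
Qed.

Lemma distr_sub (I : finType) (a : I -> R) (A B : {set I}) :
  A \subset B -> distr a A -> distr a B.
Proof.
by move=> sAB [h1 h2 h3]; split=> // i iB; apply: h2; apply: contra iB; apply: subsetP.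
Qed.

Lemma distr_le_indicator (I : finType) (a : I -> R) A k : distr a A -> a k <= (k \in A)%:R.
Proof.
move=> [a0 a1 a2]; case: (boolP (k \in A)) => kA; last by rewrite a1.
by rewrite -a2 (bigD1 k) //= lerDl; apply: sumr_ge0.
Qed.

Lemma convex_comb_le (I : finType) (a f : I -> R) m :
  (forall i, 0 <= a i) -> \sum_i a i = 1 -> (forall i, f i <= m) ->
  \sum_i a i * f i <= m.
Proof.
move=> a0 a1 fm; rewrite -[m]mul1r -a1 mulr_suml; apply: ler_sum => i _.
by rewrite ler_wpM2l.
Qed.

Lemma convex_comb_eq_max (I : finType) (a f : I -> R) m :
  (forall i, 0 <= a i) -> \sum_i a i = 1 -> (forall i, f i <= m) ->
  \sum_i a i * f i = m -> forall i, a i != 0 -> f i = m.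
Proof.
move=> a0 a1 fm e i ai.
have : \sum_i a i * (m - f i) = 0.
  under eq_bigr do rewrite mulrBr.
  by rewrite sumrB -mulr_suml a1 mul1r e subrr.
have hp j : true -> 0 <= a j * (m - f j) by move=> _; rewrite mulr_ge0 ?subr_ge0.
move/(psumr_eq0P hp) => /(_ i isT) /eqP.
by rewrite mulf_eq0 (negbTE ai) /= subr_eq0 => /eqP.
Qed.

End ConvexCombinations.
Arguments delta {R I} k _.
Arguments distr_delta {R I k A}.

Section Coordinates.
Variables (R : realFieldType) (n : nat).
Notation V := 'rV[R]_n.
Notation ev := (ev R).
Notation eS := (eS R).

Lemma evE (i k : 'I_n) : ev i 0 k = delta i k.
Proof. by rewrite mxE /delta eq_sym. Qed.

Lemma eSE (S : {set 'I_n}) k : eS S 0 k = (k \in S)%:R.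
Proof.
rewrite /Defs.eS summxE; under eq_bigr do rewrite evE /delta eq_sym.
case kS: (k \in S); last by rewrite big1 // => i iS; case: eqP => // eik; rewrite -eik iS in kS.
by rewrite (bigD1 k) //= eqxx big1 ?addr0 // => i /andP [_ /negbTE ->].
Qed.

Lemma eS_inj : injective (@Defs.eS R n).
Proof.
move=> S1 S2 e; apply/setP=> k; have := congr1 (fun v : V => v 0 k) e.
by rewrite !eSE; case: (k \in S1); case: (k \in S2) => // /eqP; rewrite ?oner_eq0 // eq_sym oner_eq0.
Qed.

Lemma dotD (w x y : V) : dot w (x + y) = dot w x + dot w y.
Proof. by rewrite /dot -big_split /=; apply: eq_bigr => j _; rewrite mxE mulrDr. Qed.

Lemma dotZ (w x : V) c : dot w (c *: x) = c * dot w x.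
Proof. by rewrite /dot mulr_sumr; apply: eq_bigr => j _; rewrite mxE mulrCA. Qed.

Lemma dotN (w x : V) : dot w (- x) = - dot w x.
Proof. by rewrite -scaleN1r dotZ mulN1r. Qed.

Lemma dot_sum (w : V) (I : finType) (P : pred I) (F : I -> V) :
  dot w (\sum_(i | P i) F i) = \sum_(i | P i) dot w (F i).
Proof.
apply: (big_morph (dot w) (dotD w)).
by rewrite /dot big1 // => j _; rewrite mxE mulr0.
Qed.

Lemma dot_ev (w : V) i : dot w (ev i) = w 0 i.
Proof. by rewrite /dot; under eq_bigr do rewrite evE mulrC; rewrite sum_delta. Qed.

Lemma dot_eS (w : V) S : dot w (eS S) = wsum (fun i => w 0 i) S.
Proof. by rewrite /Defs.eS dot_sum; apply: eq_bigr => i _; rewrite dot_ev. Qed.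


Lemma eS_exchange (B : {set 'I_n}) a b : a \in B -> b \notin B ->
  eS (b |: (B :\ a)) = eS B - ev a + ev b.
Proof.
move=> aB nbB; apply/rowP => k; rewrite !mxE !eSE !inE (eq_sym a k) (eq_sym b k).
have [->|kb] := eqVneq k b.
  have [eab|ab] := eqVneq b a; first by rewrite eab aB in nbB.
  by rewrite (negbTE nbB) /=; lra.
have [->|ka] := eqVneq k a; first by rewrite aB /=; lra.
by rewrite /=; case: (k \in B) => /=; lra.
Qed.

End Coordinates.

Section BasePolytope.
Variables (R : realFieldType) (n : nat) (BB : {set {set 'I_n}}).
Hypothesis hM : matroid_bases BB.
Notation V := 'rV[R]_n.
Notation eS := (eS R).
Notation PM := (@PM R n BB).
Notation wf w := (fun i => (w : V) 0 i).

Lemma PM_eS B : B \in BB -> PM (eS B).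
Proof.
move=> hB; exists (delta B); have [h1 h2 h3] := distr_delta (R := R) hB.
by split=> //; rewrite sum_delta_scale.
Qed.

Lemma PM_dot (w : V) g : PM g ->
  exists2 l, distr l BB & dot w g = \sum_B l B * wsum (wf w) B.
Proof.
move=> [l [h1 h2 h3 ->]]; exists l; first by split.
by rewrite dot_sum; apply: eq_bigr => B _; rewrite dotZ dot_eS.
Qed.

Lemma PM_dot_le (w : V) B0 g : max_basis BB (wf w) B0 -> PM g ->
  dot w g <= wsum (wf w) B0.
Proof.
move=> [h0 hm] /(PM_dot w) [l [l0 l1 l2] ->].
pose f B := if B \in BB then wsum (wf w) B else wsum (wf w) B0.
have -> : \sum_B l B * wsum (wf w) B = \sum_B l B * f B.
  by apply: eq_bigr => B _; rewrite /f; case: ifP => // /negbT /l1 ->; rewrite !mul0r.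
by apply: convex_comb_le => // B; rewrite /f; case: ifP => // /hm.
Qed.

Lemma Gpart_max_basis (w : V) B0 : max_basis BB (wf w) B0 -> Gpart BB w (eS B0).
Proof.
move=> hm; split; first exact: PM_eS hm.1.
by move=> g' hg'; rewrite dot_eS; apply: PM_dot_le.
Qed.

Lemma GpartE (w : V) B0 g : max_basis BB (wf w) B0 ->
  Gpart BB w g <-> PM g /\ dot w g = wsum (wf w) B0.
Proof.
move=> hm; split.
  move=> [hg hmax]; split=> //; apply/eqP; rewrite eq_le PM_dot_le //=.
  by rewrite -dot_eS; apply: hmax; apply: PM_eS hm.1.
by move=> [hg e]; split=> // g' hg'; rewrite e; apply: PM_dot_le.
Qed.

Lemma Gpart_strict_max (w : V) B0 g : B0 \in BB ->
  (forall B, B \in BB -> B != B0 -> wsum (wf w) B < wsum (wf w) B0) ->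
  Gpart BB w g -> g = eS B0.
Proof.
move=> h0 hs.
have hm : max_basis BB (wf w) B0.
  by split=> // B hB; case: (eqVneq B B0) => [->//|ne]; apply: ltW (hs _ hB ne).
move/(GpartE _ hm) => [[l [l0 l1 l2 ->]] e].
pose f B := if B \in BB then wsum (wf w) B else wsum (wf w) B0.
have e2 : \sum_B l B * f B = wsum (wf w) B0.
  rewrite -e dot_sum; apply: eq_bigr => B _; rewrite dotZ dot_eS /f.
  by case: ifP => // /negbT /l1 ->; rewrite !mul0r.
have fle B : f B <= wsum (wf w) B0.
  by rewrite /f; case: ifP => // hB; case: (eqVneq B B0) => [->//|ne]; apply: ltW (hs _ hB ne).
have lz B : B != B0 -> l B = 0.
  move=> ne; apply/eqP; apply/negP => /negP lB.
  have := convex_comb_eq_max l0 l2 fle e2 lB; rewrite /f; case: ifP => hB.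
    by move=> e3; have := hs _ hB ne; rewrite e3 ltxx.
  by move: lB; rewrite (l1 _ (negbT hB)) eqxx.
have l0' : l B0 = 1 by rewrite -l2 (bigD1 B0) //= big1 ?addr0 // => B /lz.
by rewrite (bigD1 B0) //= big1 ?addr0 ?l0' ?scale1r // => B /lz ->; rewrite scale0r.
Qed.

Lemma Gpart_uniq_strict (w : V) B0 : max_basis BB (wf w) B0 ->
  (forall g, Gpart BB w g -> g = eS B0) ->
  forall B, B \in BB -> B != B0 -> wsum (wf w) B < wsum (wf w) B0.
Proof.
move=> mB0 hG B hB ne; rewrite ltNge; apply/negP => le.
have mB : max_basis BB (wf w) B by split=> // B' /mB0.2 /le_trans; apply.
by move: ne; rewrite (eS_inj (hG _ (Gpart_max_basis mB))) eqxx.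
Qed.

Lemma PM_coord g : PM g ->
  exists2 l, distr l BB & forall k, g 0 k = \sum_B l B * (k \in B)%:R.
Proof.
move=> [l [h1 h2 h3 ->]]; exists l; first by split.
by move=> k; rewrite summxE; apply: eq_bigr => B _; rewrite mxE eSE.
Qed.

Lemma PM_coord_bounds g k : PM g -> 0 <= g 0 k <= 1.
Proof.
move=> /PM_coord [l [l0 l1 l2] ->]; apply/andP; split.
  by apply: sumr_ge0 => B _; apply: mulr_ge0 => //; case: (k \in B).
by apply: convex_comb_le => // B; case: (k \in B).
Qed.

Lemma PM_eS_basis S : PM (eS S) -> S \in BB.
Proof.
move=> /PM_coord [l [l0 l1 l2] hc].
have [B lB] : exists B, l B != 0.
  case: (pickP (fun B => l B != 0)) => [B lB|H]; first by exists B.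
  move: l2; rewrite big1 => [/eqP|B _]; first by rewrite eq_sym oner_eq0.
  by have := H B => /negbFE /eqP.
have BBB : B \in BB by apply/negPn/negP => /l1 e; rewrite e eqxx in lB.
suff -> : S = B by [].
apply/setP=> k; have := hc k; rewrite eSE; case kS: (k \in S) => /esym e.
  have fle (B' : {set 'I_n}) : (k \in B')%:R <= 1 :> R by case: (k \in B').
  have := convex_comb_eq_max l0 l2 fle e lB.
  by case: (k \in B) => // /eqP; rewrite eq_sym oner_eq0.
have e' : \sum_B l B * (- (k \in B)%:R) = 0.
  by under eq_bigr do rewrite mulrN; rewrite sumrN e oppr0.
have fle (B' : {set 'I_n}) : - (k \in B')%:R <= 0 :> R by case: (k \in B'); rewrite ?oppr0 // lerN10.
have := convex_comb_eq_max l0 l2 fle e' lB.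
by case: (k \in B) => // /eqP; rewrite oppr_eq0 oner_eq0.
Qed.

Lemma PM_coord_sum B1 g : B1 \in BB -> PM g -> \sum_k g 0 k = (#|B1|)%:R.
Proof.
move=> h1 /PM_coord [l [l0 l1 l2] hc].
under eq_bigr do rewrite hc.
rewrite exchange_big /=.
have -> : \sum_B \sum_k l B * (k \in B)%:R = \sum_B l B * (#|B1|)%:R.
  apply: eq_bigr => B _; rewrite -mulr_sumr; case hB: (B \in BB).
    rewrite -(card_basis_eq hM hB h1) -sum1_card natr_sum.
    congr (_ * _); rewrite (big_mkcond (fun k => k \in B)) /=.
    by apply: eq_bigr => k _; case: (k \in B).
  by rewrite l1 ?hB // !mul0r.
by rewrite -mulr_suml l2 mul1r.
Qed.

(* Since P(M) lies in the hyperplane sum_k x_k = rank, adding a constant to w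
   does not change the face of P(M) it selects. *)
Lemma Gpart_shift (w w' : V) c : (forall i, w' 0 i = w 0 i + c) ->
  forall g, Gpart BB w' g <-> Gpart BB w g.
Proof.
move=> h g; have /set0Pn [B1 h1] := hM.1.
have E x : PM x -> dot w' x = dot w x + c * (#|B1|)%:R.
  move=> hx; rewrite -(PM_coord_sum h1 hx) /dot mulr_sumr -big_split /=.
  by apply: eq_bigr => k _; rewrite h mulrDl.
by split=> [] [hg hm]; split=> // g' hg'; move: (hm _ hg'); rewrite !E // lerD2r.
Qed.


Lemma transferE (B : {set 'I_n}) a b : B \in BB -> a != b ->
  transfer R BB B a b <-> [/\ a \in B, b \notin B & b |: (B :\ a) \in BB].
Proof.
move=> hB ab; split; last first.
  by case=> aB nbB hB'; rewrite /transfer -eS_exchange //; apply: PM_eS.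
rewrite /transfer => hp.
have := PM_coord_bounds a hp; have := PM_coord_bounds b hp.
rewrite !mxE !eSE !eqxx (negbTE ab) (eq_sym b a) (negbTE ab) /=.
move=> /andP [hb1 hb2] /andP [ha1 ha2].
have aB : a \in B by apply/negPn/negP => naB; move: ha1; rewrite (negbTE naB) /=; lra.
have nbB : b \notin B by apply/negP => bB; move: hb2; rewrite bB /=; lra.
by split=> //; apply: PM_eS_basis; rewrite eS_exchange.
Qed.

End BasePolytope.

(** * Cells of the mixed subdivision *)

Section Subdivision.
Variables (R : realFieldType) (n : nat) (n_gt0 : (0 < n)%N).
Variable BB : {set {set 'I_n}}.
Hypothesis hM : matroid_bases BB.
Variables (u t : R) (alpha beta : 'I_n -> R).
Hypotheses (u_gt0 : 0 < u) (t_gt0 : 0 < t).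
Hypothesis alpha_incr : forall i j : 'I_n, (i < j)%N -> alpha i < alpha j.
Hypothesis beta_incr : forall i j : 'I_n, (i < j)%N -> beta i < beta j.
Notation V := 'rV[R]_n.
Notation ev := (ev R).
Notation eS := (eS R).
Notation PM := (@PM R n BB).
Notation Lift := (Lift BB alpha beta u t).
Notation lower_set := (lower_set BB alpha beta u t).
Notation cell_by := (cell_by BB alpha beta u t).
Notation cell := (cell BB alpha beta u t).
Notation top_face := (top_face BB alpha beta u t).
Notation in_P := (in_P BB alpha beta u t).
Notation wf w := (fun i => (w : V) 0 i).

Definition i0 : 'I_n := Ordinal n_gt0.

Lemma i0_lt (i : 'I_n) : i != i0 -> (i0 < i)%N.
Proof. by move=> ne; rewrite /= lt0n; apply: contra ne => /eqP e; apply/eqP/val_inj. Qed.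

(* The values of the functional (w, -1) at the vertices (u e_i, alpha_i) and
   (-t e_i, beta_i) of the two simplex summands of Lift. *)
Definition Dgain (w : V) i := u * w 0 i - alpha i.
Definition Ngain (w : V) i := - (t * w 0 i) - beta i.
Definition Dface (w : V) := [set i | [forall j, Dgain w j <= Dgain w i]].
Definition Nface (w : V) := [set i | [forall j, Ngain w j <= Ngain w i]].

Definition Dpt (a : 'I_n -> R) : V := \sum_i a i *: (u *: ev i).
Definition Npt (b : 'I_n -> R) : V := \sum_i b i *: (- (t *: ev i)).
Definition height (a b : 'I_n -> R) := \sum_i a i * alpha i + \sum_i b i * beta i.
Definition vertex_pt (i : 'I_n) (B : {set 'I_n}) (j : 'I_n) : V :=
  Dpt (delta i) + eS B + Npt (delta j).

Definition Dbest (w : V) : 'I_n := [arg max_(i > i0) Dgain w i]%O.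
Definition Nbest (w : V) : 'I_n := [arg max_(i > i0) Ngain w i]%O.
Definition basis0 : {set 'I_n} := odflt set0 [pick B in BB].
Definition best_basis (w : V) : {set 'I_n} :=
  [arg max_(B > basis0 | B \in BB) wsum (wf w) B]%O.
Definition lift_max (w : V) :=
  Dgain w (Dbest w) + wsum (wf w) (best_basis w) + Ngain w (Nbest w).

Lemma Dbest_max w j : Dgain w j <= Dgain w (Dbest w).
Proof. by rewrite /Dbest; case: arg_maxP => // i _; apply. Qed.

Lemma Nbest_max w j : Ngain w j <= Ngain w (Nbest w).
Proof. by rewrite /Nbest; case: arg_maxP => // i _; apply. Qed.

Lemma best_basisP w : max_basis BB (wf w) (best_basis w).
Proof.
rewrite /best_basis; case: arg_maxP => [|B hB H]; last by split.
rewrite /basis0; case: pickP => //= H; have /set0Pn [B hB] := hM.1.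
by have := H B; rewrite hB.
Qed.

Lemma DfaceP w i : reflect (forall j, Dgain w j <= Dgain w i) (i \in Dface w).
Proof. by rewrite inE; apply: forallP. Qed.

Lemma NfaceP w i : reflect (forall j, Ngain w j <= Ngain w i) (i \in Nface w).
Proof. by rewrite inE; apply: forallP. Qed.

Lemma Dbest_in w : Dbest w \in Dface w.
Proof. by apply/DfaceP => j; apply: Dbest_max. Qed.

Lemma Nbest_in w : Nbest w \in Nface w.
Proof. by apply/NfaceP => j; apply: Nbest_max. Qed.

Lemma Dface_gain w i : i \in Dface w -> Dgain w i = Dgain w (Dbest w).
Proof. by move/DfaceP=> H; apply/eqP; rewrite eq_le Dbest_max H. Qed.

Lemma Nface_gain w i : i \in Nface w -> Ngain w i = Ngain w (Nbest w).
Proof. by move/NfaceP=> H; apply/eqP; rewrite eq_le Nbest_max H. Qed.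

Lemma Dgain_lt w k : k \notin Dface w -> Dgain w k < Dgain w (Dbest w).
Proof.
rewrite lt_neqAle Dbest_max andbT; apply: contra => /eqP e; apply/DfaceP => j.
by rewrite e; apply: Dbest_max.
Qed.

Lemma Ngain_lt w k : k \notin Nface w -> Ngain w k < Ngain w (Nbest w).
Proof.
rewrite lt_neqAle Nbest_max andbT; apply: contra => /eqP e; apply/NfaceP => j.
by rewrite e; apply: Nbest_max.
Qed.

Lemma lfun_lift_pt (w : V) a b g :
  lfun w (Dpt a + g + Npt b, height a b) =
  \sum_i a i * Dgain w i + dot w g + \sum_i b i * Ngain w i.
Proof.
have dot_Dpt : dot w (Dpt a) = \sum_i a i * (u * w 0 i).
  by rewrite dot_sum; apply: eq_bigr => i _; rewrite !dotZ dot_ev.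
have dot_Npt : dot w (Npt b) = \sum_i b i * (- (t * w 0 i)).
  by rewrite dot_sum; apply: eq_bigr => i _; rewrite dotZ dotN dotZ dot_ev.
rewrite /lfun /= !dotD dot_Dpt dot_Npt /height /Dgain /Ngain.
under [X in _ = X + _ + _]eq_bigr do rewrite mulrBr.
under [X in _ = _ + _ + X]eq_bigr do rewrite mulrBr.
by rewrite !sumrB; lra.
Qed.

Definition lift_coords (a b : 'I_n -> R) (g : V) :=
  [/\ (forall i, 0 <= a i) /\ \sum_i a i = 1,
      (forall i, 0 <= b i) /\ \sum_i b i = 1 & PM g].

Lemma LiftE z : Lift z <->
  exists a b g, lift_coords a b g /\ z = (Dpt a + g + Npt b, height a b).
Proof.
split; last by move=> [a [b [g [[ha hb hg] ->]]]]; exists a, b; exists g.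
move=> [a [b [g hg [ha hb e1 e2]]]]; exists a, b, g; split; first by split.
by case: z e1 e2 => x h /= -> ->.
Qed.

Lemma lift_coords_vertex i B j : B \in BB -> lift_coords (delta i) (delta j) (eS B).
Proof.
have [d1 _ d2] := distr_delta (R := R) (in_setT i).
have [e1 _ e2] := distr_delta (R := R) (in_setT j).
by split=> //; apply: PM_eS.
Qed.

Lemma lfun_le_lift_max (w : V) z : Lift z -> lfun w z <= lift_max w.
Proof.
move/LiftE=> [a [b [g [[[a0 a1] [b0 b1] hg] ->]]]].
rewrite lfun_lift_pt /lift_max.
have h1 := convex_comb_le a0 a1 (Dbest_max w).
have h2 := PM_dot_le (best_basisP w) hg.
have h3 := convex_comb_le b0 b1 (Nbest_max w).
lra.
Qed.

Lemma lower_setE (w : V) z : lower_set w z <-> Lift z /\ lfun w z = lift_max w.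
Proof.
split; last by move=> [hz e]; split=> // z' hz'; rewrite e; apply: lfun_le_lift_max.
move=> [hz hmax]; split=> //; apply/eqP; rewrite eq_le lfun_le_lift_max //=.
have : Lift (vertex_pt (Dbest w) (best_basis w) (Nbest w),
             height (delta (Dbest w)) (delta (Nbest w))).
  apply/LiftE; do 3 eexists; split; last by [].
  exact: lift_coords_vertex (best_basisP w).1.
move/hmax; rewrite lfun_lift_pt !sum_delta dot_eS /lift_max; exact: le_trans.
Qed.

Lemma lower_set_supp (w : V) a b g : lift_coords a b g ->
  lfun w (Dpt a + g + Npt b, height a b) = lift_max w ->
  [/\ forall i, a i != 0 -> i \in Dface w, Gpart BB w g &
      forall j, b j != 0 -> j \in Nface w].
Proof.
move=> [[a0 a1] [b0 b1] hg]; rewrite lfun_lift_pt /lift_max => e.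
have h1 := convex_comb_le a0 a1 (Dbest_max w).
have h2 := PM_dot_le (best_basisP w) hg.
have h3 := convex_comb_le b0 b1 (Nbest_max w).
have e1 : \sum_i a i * Dgain w i = Dgain w (Dbest w) by lra.
have e2 : dot w g = wsum (wf w) (best_basis w) by lra.
have e3 : \sum_i b i * Ngain w i = Ngain w (Nbest w) by lra.
split.
- move=> i ai; apply/DfaceP => j.
  by rewrite (convex_comb_eq_max a0 a1 (Dbest_max w) e1 ai); apply: Dbest_max.
- by apply/(GpartE _ (best_basisP w)).
- move=> i bi; apply/NfaceP => j.
  by rewrite (convex_comb_eq_max b0 b1 (Nbest_max w) e3 bi); apply: Nbest_max.
Qed.

Lemma lower_set_of_supp (w : V) a b g :
  distr a (Dface w) -> distr b (Nface w) -> Gpart BB w g ->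
  lower_set w (Dpt a + g + Npt b, height a b).
Proof.
move=> [a0 a1 a2] [b0 b1 b2] hg; apply/lower_setE; split.
  by apply/LiftE; exists a, b, g; split=> //; split=> //; case: hg.
rewrite lfun_lift_pt /lift_max.
have -> : \sum_i a i * Dgain w i = Dgain w (Dbest w).
  rewrite -[RHS]mul1r -a2 mulr_suml; apply: eq_bigr => i _.
  by case: (boolP (i \in Dface w)) => [/Dface_gain -> //| /a1 ->]; rewrite !mul0r.
have -> : \sum_i b i * Ngain w i = Ngain w (Nbest w).
  rewrite -[RHS]mul1r -b2 mulr_suml; apply: eq_bigr => i _.
  by case: (boolP (i \in Nface w)) => [/Nface_gain -> //| /b1 ->]; rewrite !mul0r.
by have [_ ->] := (GpartE _ (best_basisP w)).1 hg.
Qed.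

Definition cell_pts (w : V) (x : V) := exists h, lower_set w (x, h).

Definition mixed_pts (A C : {set 'I_n}) (G : V -> Prop) (x : V) :=
  exists a b g, [/\ distr a A, distr b C, G g & x = Dpt a + g + Npt b].

Lemma mixed_pts_vertex (A C : {set 'I_n}) (G : V -> Prop) i B j :
  i \in A -> j \in C -> G (eS B) -> mixed_pts A C G (vertex_pt i B j).
Proof.
move=> iA jC hG; exists (delta i), (delta j), (eS B).
by split=> //; apply: distr_delta.
Qed.

Lemma mixed_pts_mono (A A' C C' : {set 'I_n}) (G G' : V -> Prop) x :
  A \subset A' -> C \subset C' -> (forall g, G g -> G' g) ->
  mixed_pts A C G x -> mixed_pts A' C' G' x.
Proof.
move=> sA sC sG [a [b [g [ha hb hg ->]]]]; exists a, b, g.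
by split; [apply: distr_sub ha | apply: distr_sub hb | apply: sG |].
Qed.

Lemma cell_ptsE w x : cell_pts w x <-> mixed_pts (Dface w) (Nface w) (Gpart BB w) x.
Proof.
split; last by move=> [a [b [g [ha hb hg ->]]]]; exists (height a b); apply: lower_set_of_supp.
move=> [h /[dup] hl /lower_setE [/LiftE [a [b [g [hd e]]]] ef]].
case: e ef => -> -> ef.
have [ha hg hb] := lower_set_supp hd ef.
case: hd => [[a0 a1] [b0 b1] _].
exists a, b, g; split=> //.
- by split=> // i iA; apply/eqP/negPn/negP => /ha; rewrite (negbTE iA).
- by split=> // i iA; apply/eqP/negPn/negP => /hb; rewrite (negbTE iA).
Qed.

Lemma cell_byE w (C : V -> Prop) : cell_by w C <-> forall x, C x <-> cell_pts w x.
Proof.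
split; first by move=> [_ H].
move=> H; split=> //.
exists (vertex_pt (Dbest w) (best_basis w) (Nbest w),
        height (delta (Dbest w)) (delta (Nbest w))).
apply: lower_set_of_supp; [exact: distr_delta (Dbest_in w) |
  exact: distr_delta (Nbest_in w) | exact: Gpart_max_basis (best_basisP w)].
Qed.

(* The lifting height of a vertex is determined, so a vertex of one cell that
   lies in another cell is supported on the faces selected there. *)
Lemma cell_pts_vertex (w w2 : V) (i : 'I_n) (B : {set 'I_n}) (j : 'I_n) :
  B \in BB -> i \in Dface w2 -> j \in Nface w2 -> Gpart BB w2 (eS B) ->
  cell_pts w (vertex_pt i B j) ->
  [/\ i \in Dface w, Gpart BB w (eS B) & j \in Nface w].
Proof.
move=> hB hi hj hg [h hl].
have dd := lift_coords_vertex i j hB.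
have l2 : lower_set w2 (vertex_pt i B j, height (delta i) (delta j)).
  by apply: lower_set_of_supp => //; apply: distr_delta.
have Lz : Lift (vertex_pt i B j, height (delta i) (delta j)).
  by apply/LiftE; do 3 eexists; split; [exact: dd|].
have c1 := hl.2 _ Lz; have c2 := l2.2 _ hl.1.
move: c1 c2; rewrite /lfun /= => c1 c2.
have eh : h = height (delta i) (delta j) by lra.
move: hl; rewrite eh => /lower_setE [_ e].
have [ha hg' hb] := lower_set_supp dd e.
by split=> //; [apply: ha | apply: hb]; rewrite /delta eqxx oner_eq0.
Qed.

Lemma sum_formE (X B Y : {set 'I_n}) (x : V) :
  sum_form u t X B Y x <-> mixed_pts X Y (fun g => g = eS B) x.
Proof.
split.
  move=> [p [q [[p1 [p2 [[p0 [l [l0 l1 l2 ep0]] ep1] ep2 ep]]] [q0 [l' [m0 m1 m2 eq0]] eq1] ex]]].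
  exists l, l', (eS B); split=> //.
  rewrite ex ep ep1 ep2 eq1 ep0 eq0 /Dpt /Npt !scaler_sumr.
  by congr (_ + _ + _); apply: eq_bigr => i _; rewrite ?scalerN !scalerA mulrC.
move=> [a [b [g [[a0 a1 a2] [b0 b1 b2] -> ->]]]].
exists (Dpt a + eS B), (Npt b); split=> //.
  exists (Dpt a), (eS B); split=> //; exists (\sum_i a i *: ev i); first by exists a.
  by rewrite /Dpt scaler_sumr; apply: eq_bigr => i _; rewrite !scalerA mulrC.
exists (\sum_i b i *: (- ev i)); first by exists b.
by rewrite /Npt scaler_sumr; apply: eq_bigr => i _; rewrite !scalerN !scalerA mulrC.
Qed.

Lemma sum_form_vertex (X B Y : {set 'I_n}) i j :
  i \in X -> j \in Y -> sum_form u t X B Y (vertex_pt i B j).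
Proof. by move=> iX jY; apply/sum_formE; apply: mixed_pts_vertex. Qed.

(** * Top-degree faces *)

(* With i0 in X, wt X makes Dgain equal to - alpha i0 on X and Ngain equal to
   - beta i0 on Yset X = (E \ X) + i0, and strictly smaller elsewhere. *)
Definition wt (X : {set 'I_n}) : V :=
  \row_i (if i \in X then (alpha i - alpha i0) / u else (beta i0 - beta i) / t).
Definition Yset (T : {set 'I_n}) := [set i | (i \notin T) || (i == i0)].

Lemma wtE (X : {set 'I_n}) (i : 'I_n) :
  wt X 0 i = if i \in X then (alpha i - alpha i0) / u else (beta i0 - beta i) / t.
Proof. by rewrite mxE. Qed.

Lemma i0_Yset (T : {set 'I_n}) : i0 \in Yset T.
Proof. by rewrite inE eqxx orbT. Qed.

Lemma Dgain_wt_in (X : {set 'I_n}) (i : 'I_n) : i \in X -> Dgain (wt X) i = - alpha i0.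
Proof. by move=> iX; rewrite /Dgain wtE iX; field; apply: lt0r_neq0. Qed.

Lemma Dgain_wt_out (X : {set 'I_n}) (i : 'I_n) :
  i0 \in X -> i \notin X -> Dgain (wt X) i < - alpha i0.
Proof.
move=> zX iX; rewrite /Dgain wtE (negbTE iX).
have ne : i != i0 by apply: contraNneq iX => ->.
have hb := beta_incr (i0_lt ne).
have : (beta i0 - beta i) / t < 0 by rewrite pmulr_llt0 ?invr_gt0 // subr_lt0.
by rewrite -(pmulr_rlt0 _ u_gt0) => h; have := alpha_incr (i0_lt ne); lra.
Qed.

Lemma Dface_wt (X : {set 'I_n}) : i0 \in X -> Dface (wt X) = X.
Proof.
move=> zX; apply/setP => i; apply/DfaceP/idP => [H|iX j].
  apply/negPn/negP => iX; have := H i0; rewrite Dgain_wt_in //.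
  by have := Dgain_wt_out zX iX; lra.
rewrite (Dgain_wt_in iX); case: (boolP (j \in X)) => jX.
  by rewrite (Dgain_wt_in jX).
exact: ltW (Dgain_wt_out zX jX).
Qed.

Lemma Ngain_wt_in (X : {set 'I_n}) (i : 'I_n) :
  i0 \in X -> i \in Yset X -> Ngain (wt X) i = - beta i0.
Proof.
move=> zX; rewrite inE => /orP [iX|/eqP ->].
  by rewrite /Ngain wtE (negbTE iX); field; apply: lt0r_neq0.
by rewrite /Ngain wtE zX subrr mul0r mulr0; lra.
Qed.

Lemma Ngain_wt_out (X : {set 'I_n}) (i : 'I_n) :
  i \notin Yset X -> Ngain (wt X) i < - beta i0.
Proof.
rewrite inE negb_or negbK => /andP [iX ne]; rewrite /Ngain wtE iX.
have ha := alpha_incr (i0_lt ne).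
have : 0 < (alpha i - alpha i0) / u by rewrite divr_gt0 // subr_gt0.
by rewrite -(pmulr_rgt0 _ t_gt0) => h; have := beta_incr (i0_lt ne); lra.
Qed.

Lemma Nface_wt (X : {set 'I_n}) : i0 \in X -> Nface (wt X) = Yset X.
Proof.
move=> zX; apply/setP => i; apply/NfaceP/idP => [H|iX j].
  apply/negPn/negP => iX; have := H i0; rewrite (Ngain_wt_in zX) ?i0_Yset //.
  by have := Ngain_wt_out iX; lra.
rewrite (Ngain_wt_in zX iX); case: (boolP (j \in Yset X)) => jX.
  by rewrite (Ngain_wt_in zX jX).
exact: ltW (Ngain_wt_out jX).
Qed.

Lemma wt_lt_in_out (X : {set 'I_n}) (i j : 'I_n) :
  i0 \in X -> i \in X -> j \notin X -> wt X 0 j < wt X 0 i.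
Proof.
move=> zX iX jX; rewrite !wtE iX (negbTE jX).
have ne : j != i0 by apply: contraNneq jX => ->.
have h1 : (beta i0 - beta j) / t < 0.
  by rewrite pmulr_llt0 ?invr_gt0 // subr_lt0; apply: beta_incr (i0_lt ne).
have h2 : 0 <= (alpha i - alpha i0) / u.
  rewrite divr_ge0 ?subr_ge0 //; last exact: ltW.
  by case: (eqVneq i i0) => [->//|ne']; apply: ltW (alpha_incr (i0_lt ne')).
lra.
Qed.

Lemma wt_lt_in (X : {set 'I_n}) (i j : 'I_n) :
  i \in X -> j \in X -> (i < j)%N -> wt X 0 i < wt X 0 j.
Proof.
move=> iX jX lij; rewrite !wtE iX jX ltr_pM2r ?invr_gt0 // ltrBlDr subrK.
exact: alpha_incr.
Qed.

Lemma wt_lt_out (X : {set 'I_n}) (i j : 'I_n) :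
  i \notin X -> j \notin X -> (i < j)%N -> wt X 0 j < wt X 0 i.
Proof.
move=> iX jX lij; rewrite !wtE (negbTE iX) (negbTE jX) ltr_pM2r ?invr_gt0 //.
by have := beta_incr lij; lra.
Qed.

Lemma wt_inj (X : {set 'I_n}) : i0 \in X -> injective (wf (wt X)).
Proof.
move=> zX i j /eqP; apply: contraTeq => ne; rewrite neq_lt.
have [lij|lji|eij] := ltngtP i j; last by move: ne; rewrite (val_inj eij) eqxx.
  case: (boolP (i \in X)) => iX; case: (boolP (j \in X)) => jX.
  - by rewrite wt_lt_in.
  - by rewrite (wt_lt_in_out zX iX jX) orbT.
  - by rewrite (wt_lt_in_out zX jX iX).
  - by rewrite (wt_lt_out iX jX lij) orbT.
case: (boolP (i \in X)) => iX; case: (boolP (j \in X)) => jX.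
- by rewrite (wt_lt_in jX iX lji) orbT.
- by rewrite (wt_lt_in_out zX iX jX) orbT.
- by rewrite (wt_lt_in_out zX jX iX).
- by rewrite (wt_lt_out jX iX lji).
Qed.

Definition top_basis (X : {set 'I_n}) := best_basis (wt X).

Lemma top_basis_in (X : {set 'I_n}) : top_basis X \in BB.
Proof. exact: (best_basisP (wt X)).1. Qed.

Lemma top_basis_uniq (X B : {set 'I_n}) :
  i0 \in X -> max_basis BB (wf (wt X)) B -> B = top_basis X.
Proof. by move=> zX hB; apply: (max_basis_uniq hM (wt_inj zX) hB (best_basisP _)). Qed.

Lemma Gpart_wt (X : {set 'I_n}) (g : V) :
  i0 \in X -> Gpart BB (wt X) g <-> g = eS (top_basis X).
Proof.
move=> zX; split=> [|->]; last exact: Gpart_max_basis (best_basisP _).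
apply: Gpart_strict_max (top_basis_in X) _ => B hB ne.
rewrite ltNge; apply/negP => le; move: ne; rewrite (@top_basis_uniq X B) ?eqxx //.
by split=> // B' /(best_basisP (wt X)).2 /le_trans; apply.
Qed.

Definition top_cell (X : {set 'I_n}) := sum_form u t X (top_basis X) (Yset X).

Lemma cell_pts_wt (X : {set 'I_n}) (x : V) :
  i0 \in X -> cell_pts (wt X) x <-> top_cell X x.
Proof.
move=> zX; rewrite cell_ptsE /top_cell sum_formE (Dface_wt zX) (Nface_wt zX).
by split; apply: mixed_pts_mono => // g /Gpart_wt; apply.
Qed.

Lemma Dface_Nface_uniq (w : V) i j :
  i \in Dface w -> i \in Nface w -> j \in Dface w -> j \in Nface w -> i = j.
Proof.
move=> ai ci aj cj.
have ep : Dgain w i = Dgain w j by rewrite (Dface_gain ai) (Dface_gain aj).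
have eq : Ngain w i = Ngain w j by rewrite (Nface_gain ci) (Nface_gain cj).
move: ep eq; rewrite /Dgain /Ngain => ep eq.
wlog lij : i j ai ci aj cj ep eq / (i < j)%N.
  move=> H; case: (ltngtP i j) => [l|l|/val_inj //]; first exact: H.
  by apply/esym; apply: H.
have ha := alpha_incr lij; have hb := beta_incr lij.
have h1 : u * (w 0 j - w 0 i) = alpha j - alpha i by lra.
have h2 : t * (w 0 i - w 0 j) = beta j - beta i by lra.
have p1 : 0 < w 0 j - w 0 i by rewrite -(pmulr_rgt0 _ u_gt0) h1 subr_gt0.
have p2 : 0 < w 0 i - w 0 j by rewrite -(pmulr_rgt0 _ t_gt0) h2 subr_gt0.
by have := addr_gt0 p1 p2; rewrite addrA subrK subrr ltxx.
Qed.

Lemma Dface_Nface_cover_i0 (w : V) k : (forall i, (i \in Dface w) || (i \in Nface w)) ->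
  k \in Dface w -> k \in Nface w -> k = i0.
Proof.
move=> cov ak ck; apply/eqP/negPn/negP => ne.
have lk := i0_lt ne; have ha := alpha_incr lk; have hb := beta_incr lk.
case/orP: (cov i0) => hz.
  have nz : i0 \notin Nface w.
    by apply/negP => cz; move: ne; rewrite (Dface_Nface_uniq hz cz ak ck) eqxx.
  have ep : Dgain w i0 = Dgain w k by rewrite (Dface_gain hz) (Dface_gain ak).
  have lt : Ngain w i0 < Ngain w k by rewrite (Nface_gain ck) Ngain_lt.
  move: ep lt; rewrite /Dgain /Ngain => ep lt.
  have h1 : u * (w 0 k - w 0 i0) = alpha k - alpha i0 by lra.
  have p1 : 0 < w 0 k - w 0 i0 by rewrite -(pmulr_rgt0 _ u_gt0) h1 subr_gt0.
  have : 0 < t * (w 0 k - w 0 i0) by rewrite mulr_gt0.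
  lra.
have nz : i0 \notin Dface w.
  by apply/negP => az; move: ne; rewrite (Dface_Nface_uniq az hz ak ck) eqxx.
have eq : Ngain w i0 = Ngain w k by rewrite (Nface_gain hz) (Nface_gain ck).
have lt : Dgain w i0 < Dgain w k by rewrite (Dface_gain ak) Dgain_lt.
move: eq lt; rewrite /Dgain /Ngain => eq lt.
have h2 : t * (w 0 i0 - w 0 k) = beta k - beta i0 by lra.
have p2 : 0 < w 0 i0 - w 0 k by rewrite -(pmulr_rgt0 _ t_gt0) h2 subr_gt0.
have : 0 < u * (w 0 i0 - w 0 k) by rewrite mulr_gt0.
lra.
Qed.

Lemma wt_shift (w : V) (X : {set 'I_n}) : i0 \in X ->
  X \subset Dface w -> Yset X \subset Nface w ->
  forall i, w 0 i = wt X 0 i + w 0 i0.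
Proof.
move=> zX /subsetP hA /subsetP hC i; rewrite wtE.
case: ifP => iX.
  have : Dgain w i = Dgain w i0 by rewrite (Dface_gain (hA _ iX)) (Dface_gain (hA _ zX)).
  rewrite /Dgain => e; apply: (mulfI (lt0r_neq0 u_gt0)).
  by rewrite mulrDr mulrCA divff ?mulr1 ?lt0r_neq0 //; lra.
have jY : i \in Yset X by rewrite inE iX.
have : Ngain w i = Ngain w i0.
  by rewrite (Nface_gain (hC _ jY)) (Nface_gain (hC _ (i0_Yset X))).
rewrite /Ngain => e; apply: (mulfI (lt0r_neq0 t_gt0)).
by rewrite mulrDr mulrCA divff ?mulr1 ?lt0r_neq0 //; lra.
Qed.

Lemma top_cell_top_face (X : {set 'I_n}) : i0 \in X -> top_face (top_cell X).
Proof.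
move=> zX; have cb : cell_by (wt X) (top_cell X).
  by apply/cell_byE => x; rewrite cell_pts_wt.
split; first by exists (wt X).
split; last by exists (wt X); split=> //; exists (eS (top_basis X)) => g; apply: Gpart_wt.
move=> C' [w' /cell_byE HC] sub.
have key i j : i \in X -> j \in Yset X ->
    [/\ i \in Dface w', Gpart BB w' (eS (top_basis X)) & j \in Nface w'].
  move=> iX jY; apply: (cell_pts_vertex (w2 := wt X)).
  - exact: top_basis_in.
  - by rewrite Dface_wt.
  - by rewrite Nface_wt.
  - by apply/Gpart_wt.
  - by apply/HC/sub/sum_form_vertex.
have hA : X \subset Dface w'.
  by apply/subsetP => i iX; have [] := key i i0 iX (i0_Yset X).
have hC : Yset X \subset Nface w'.
  by apply/subsetP => j jY; have [] := key i0 j zX jY.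
have AX : Dface w' = X.
  apply/eqP; rewrite eqEsubset hA andbT; apply/subsetP => k ak.
  apply/negPn/negP => kX; have ck : k \in Nface w' by apply: (subsetP hC); rewrite inE kX.
  have := Dface_Nface_uniq ak ck (subsetP hA _ zX) (subsetP hC _ (i0_Yset X)).
  by move=> e; rewrite e zX in kX.
have CY : Nface w' = Yset X.
  apply/eqP; rewrite eqEsubset hC andbT; apply/subsetP => k ck.
  apply/negPn/negP => kY; move: (kY); rewrite inE negb_or negbK => /andP [kX nk].
  have := Dface_Nface_uniq (subsetP hA _ kX) ck (subsetP hA _ zX) (subsetP hC _ (i0_Yset X)).
  by move=> e; rewrite e eqxx in nk.
move=> x /HC /cell_ptsE; rewrite AX CY /top_cell sum_formE.
apply: mixed_pts_mono => // g hg.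
by apply/(Gpart_wt _ zX); apply/(Gpart_shift hM (wt_shift zX hA hC)).
Qed.

Lemma top_cell_of_cover w :
  (forall g, Gpart BB w g <-> g = eS (best_basis w)) ->
  [forall i, (i \in Dface w) || (i \in Nface w)] -> Dface w :&: Nface w != set0 ->
  exists2 X : {set 'I_n}, i0 \in X & forall x, cell_pts w x <-> top_cell X x.
Proof.
move=> Gw /forallP cov /set0Pn [k]; rewrite inE => /andP [ak ck].
have ek := Dface_Nface_cover_i0 cov ak ck; rewrite ek in ak ck.
have YA : Yset (Dface w) = Nface w.
  apply/setP => i; rewrite inE; case: (boolP (i \in Dface w)) => iA /=.
    by apply/eqP/idP => [->//| ic]; apply: Dface_Nface_uniq iA ic ak ck.
  by have := cov i; rewrite (negbTE iA).
have YC : Yset (Dface w) \subset Nface w by rewrite YA.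
have sh := wt_shift ak (subxx _) YC.
have eB : top_basis (Dface w) = best_basis w.
  by apply: (@eS_inj R); apply/Gw/(Gpart_shift hM sh)/Gpart_wt.
exists (Dface w) => // x; rewrite cell_ptsE /top_cell sum_formE YA eB.
by split; apply: mixed_pts_mono => // g; rewrite Gw.
Qed.

Definition shift_wt (w : V) (S : {set 'I_n}) (s : R) : V :=
  w - s *: \row_i ((i \in S)%:R : R).

Lemma Dgain_shift w S s i :
  Dgain (shift_wt w S s) i = Dgain w i - u * s * (i \in S)%:R.
Proof. by rewrite /Dgain !mxE; ring. Qed.

Lemma Ngain_shift w S s i :
  Ngain (shift_wt w S s) i = Ngain w i + t * s * (i \in S)%:R.
Proof. by rewrite /Ngain !mxE; ring. Qed.

Lemma wsum_shift w S s B :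
  wsum (wf (shift_wt w S s)) B = wsum (wf w) B - s * (#|B :&: S|)%:R.
Proof.
rewrite /wsum; under eq_bigr do rewrite !mxE.
rewrite sumrB -mulr_sumr; congr (_ - _ * _).
transitivity (\sum_(i in B | i \in S) (1 : R)).
  by rewrite big_mkcondr; apply: eq_bigr => i _; case: (i \in S).
rewrite (eq_bigl (fun i => i \in B :&: S)) ?sumr_const // => i.
by rewrite inE.
Qed.

Definition Dslack (w : V) k := Dgain w (Dbest w) - Dgain w k.
Definition Nslack (w : V) k := Ngain w (Nbest w) - Ngain w k.
Definition Bslack (w : V) (B : {set 'I_n}) := wsum (wf w) (best_basis w) - wsum (wf w) B.
Definition Bdrop (S B : {set 'I_n}) (w : V) : R :=
  (#|best_basis w :&: S| - #|B :&: S|)%:R.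

Lemma Dface_shift (w : V) (S : {set 'I_n}) (s : R) : Dface w \subset S ->
  (forall k, k \notin S -> u * s <= Dslack w k) ->
  Dface w \subset Dface (shift_wt w S s).
Proof.
move=> AS hD; apply/subsetP => i iA; apply/DfaceP => j.
rewrite !Dgain_shift (Dface_gain iA) (subsetP AS _ iA) mulr1.
have := Dbest_max w j; case jS: (j \in S); rewrite ?mulr1 ?mulr0 => h; first lra.
by have := hD _ (negbT jS); rewrite /Dslack; lra.
Qed.

Lemma Nface_shift (w : V) (S : {set 'I_n}) (s : R) : 0 <= s ->
  (Nface w \subset S) || (Nface w :&: S == set0) ->
  (Nface w :&: S == set0 -> forall k, k \in S -> t * s <= Nslack w k) ->
  Nface w \subset Nface (shift_wt w S s).
Proof.
move=> s_ge0 CS hN; apply/subsetP => j jC; apply/NfaceP => k.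
have ts : 0 <= t * s by rewrite mulr_ge0 // ltW.
have := Nbest_max w k; rewrite !Ngain_shift (Nface_gain jC).
case/orP: CS => [/subsetP sub|dis].
  by rewrite (sub _ jC); case: (k \in S); rewrite ?mulr1 ?mulr0; lra.
have jS : j \notin S.
  by apply: contraTN jC => jS; apply: contraTN dis => jC; apply/set0Pn; exists j; rewrite inE jC.
rewrite (negbTE jS) mulr0; case kS: (k \in S); rewrite ?mulr1 ?mulr0 => h; last lra.
by have := hN dis _ kS; rewrite /Nslack; lra.
Qed.

Lemma best_basis_shift (w : V) (S : {set 'I_n}) (s : R) : 0 <= s ->
  (forall B, B \in BB -> (#|B :&: S| < #|best_basis w :&: S|)%N ->
     s * Bdrop S B w <= Bslack w B) ->
  max_basis BB (wf (shift_wt w S s)) (best_basis w).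
Proof.
move=> s_ge0 hB; split; first exact: (best_basisP w).1.
move=> B inB; rewrite !wsum_shift; have := (best_basisP w).2 _ inB.
case: (ltnP #|B :&: S| #|best_basis w :&: S|) => lt.
  by have := hB _ inB lt; rewrite /Bslack /Bdrop natrB ?(ltnW lt) //; lra.
have : s * (#|best_basis w :&: S|)%:R <= s * (#|B :&: S|)%:R by rewrite ler_wpM2l ?ler_nat.
lra.
Qed.

(* The largest shift keeping the faces of w inside those of the shifted
   weight; at this shift a new vertex, label or basis becomes optimal. *)
Lemma critical_shift (w : V) (S : {set 'I_n}) k0 : k0 \notin S -> Dface w \subset S ->
  (forall B, B \in BB -> B != best_basis w -> 0 < Bslack w B) ->
  exists s, [/\ 0 < s,
    forall k, k \notin S -> u * s <= Dslack w k,
    Nface w :&: S == set0 -> forall k, k \in S -> t * s <= Nslack w k,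
    forall B, B \in BB -> (#|B :&: S| < #|best_basis w :&: S|)%N ->
      s * Bdrop S B w <= Bslack w B &
    [\/ exists2 k, k \notin S & u * s = Dslack w k,
        exists2 k, (Nface w :&: S == set0) && (k \in S) & t * s = Nslack w k |
        exists2 B, (B \in BB) && (#|B :&: S| < #|best_basis w :&: S|)%N &
          s * Bdrop S B w = Bslack w B]].
Proof.
move=> k0S AS hB.
pose ok (c : ('I_n + 'I_n) + {set 'I_n}) : bool := match c with
  | inl (inl k) => k \notin S
  | inl (inr k) => (Nface w :&: S == set0) && (k \in S)
  | inr B => (B \in BB) && (#|B :&: S| < #|best_basis w :&: S|)%N end.
pose step (c : ('I_n + 'I_n) + {set 'I_n}) : R := match c with
  | inl (inl k) => Dslack w k / u
  | inl (inr k) => Nslack w k / t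
  | inr B => Bslack w B / Bdrop S B w end.
have drop_gt0 B : (#|B :&: S| < #|best_basis w :&: S|)%N -> 0 < Bdrop S B w.
  by move=> lt; rewrite ltr0n subn_gt0.
have step_gt0 c : ok c -> 0 < step c.
  case: c => [[k|k]|B] /=.
  - move=> kS; rewrite divr_gt0 // subr_gt0 Dgain_lt //.
    by apply: contra kS; apply: subsetP.
  - case/andP => dis kS; rewrite divr_gt0 // subr_gt0 Ngain_lt //.
    by apply: contraTN kS => kC; apply: contraTN dis => kS; apply/set0Pn; exists k; rewrite inE kC.
  - case/andP => inB lt; rewrite divr_gt0 ?drop_gt0 // hB //.
    by apply: contraTneq lt => ->; rewrite ltnn.
have [c okc cmin] := @arg_minP _ R _ (inl (inl k0)) ok step k0S.
exists (step c); split; first exact: step_gt0.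
- by move=> k kS; have := cmin (inl (inl k)) kS; rewrite /= ler_pdivlMr // mulrC.
- by move=> dis k kS; have := cmin (inl (inr k)); rewrite /= dis kS ler_pdivlMr // mulrC; apply.
- move=> B inB lt; have := cmin (inr B); rewrite /= inB lt ler_pdivlMr ?drop_gt0 // mulrC.
  by apply.
- case: c okc {cmin} => [[k|k]|B] /= okc; rewrite /step.
  + by apply: Or31; exists k => //; field; apply: lt0r_neq0.
  + by apply: Or32; exists k => //; field; apply: lt0r_neq0.
  + apply: Or33; exists B => //; case/andP: okc => _ lt.
    by rewrite divfK // lt0r_neq0 ?drop_gt0.
Qed.

Lemma shift_set_of_not_top (w : V) :
  ~~ ([forall i, (i \in Dface w) || (i \in Nface w)] && (Dface w :&: Nface w != set0)) ->
  exists (S : {set 'I_n}) k0, [/\ Dface w \subset S, (Nface w \subset S) || (Nface w :&: S == set0)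
                 & k0 \notin S].
Proof.
set A := Dface w; set C := Nface w; move=> bad.
exists (if A :&: C == set0 then A else A :|: C).
have [dis|meet] := eqVneq (A :&: C) set0.
  exists (Nbest w); rewrite /= subxx setIC dis eqxx orbT; split=> //.
  by apply/negP => jA; move/setP: dis => /(_ (Nbest w)); rewrite in_setI jA Nbest_in in_set0.
move: bad; rewrite meet andbT => /forallPn [k]; rewrite negb_or => /andP [nA nC].
by exists k; rewrite subsetUl subsetUr in_setU negb_or nA nC.
Qed.

(* Shifting w down on S by the critical amount keeps every vertex of the cell
   and adds a new one, so the cell was not maximal. *)
Lemma maximal_cell_no_shift_set (w : V) (S : {set 'I_n}) k0 :
  (forall C', cell C' -> subset_pts (cell_pts w) C' ->
     subset_pts C' (cell_pts w)) ->
  (forall g, Gpart BB w g <-> g = eS (best_basis w)) ->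
  Dface w \subset S -> (Nface w \subset S) || (Nface w :&: S == set0) ->
  k0 \notin S -> False.
Proof.
move=> hmax Gw AS CS k0S.
have strict B : B \in BB -> B != best_basis w -> 0 < Bslack w B.
  move=> inB ne; rewrite subr_gt0.
  exact: (Gpart_uniq_strict (best_basisP w) (fun g => (Gw g).1)).
have [s [s_gt0 hD hN hB tight]] := critical_shift k0S AS strict.
set w' := shift_wt w S s.
have AA' := Dface_shift AS hD; have iA' := subsetP AA' _ (Dbest_in w).
have CC' := Nface_shift (ltW s_gt0) CS hN; have jC' := subsetP CC' _ (Nbest_in w).
have mB' := best_basis_shift (ltW s_gt0) hB; have GB0' := Gpart_max_basis mB'.
have back : subset_pts (cell_pts w') (cell_pts w).
  apply: hmax; first by exists w'; apply/cell_byE.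
  move=> x /cell_ptsE hx; apply/cell_ptsE; apply: mixed_pts_mono hx => // g.
  by rewrite Gw => ->.
have back_vertex i B j : B \in BB -> i \in Dface w' -> j \in Nface w' ->
    Gpart BB w' (eS B) -> [/\ i \in Dface w, Gpart BB w (eS B) & j \in Nface w].
  move=> inB hi hj hg; apply: (cell_pts_vertex inB hi hj hg (back _ _)).
  exact/cell_ptsE/(mixed_pts_vertex hi hj hg).
case: tight => [[k kS ek]|[k /andP [dis kS] ek]|[B /andP [inB lt] eB]].
- have kA' : k \in Dface w'.
    apply/DfaceP => j; apply: le_trans (DfaceP _ _ iA' j) _.
    rewrite !Dgain_shift (negbTE kS) (subsetP AS _ (Dbest_in w)) mulr0 mulr1.
    by move: ek; rewrite /Dslack; lra.
  have [kA _ _] := back_vertex _ _ _ (best_basisP w).1 kA' jC' GB0'.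
  by move: kS; rewrite (subsetP AS _ kA).
- have NS : Nbest w \notin S.
    by apply/negP => jS; move/eqP: dis => /setP /(_ (Nbest w)); rewrite in_setI Nbest_in jS in_set0.
  have kC' : k \in Nface w'.
    apply/NfaceP => j; apply: le_trans (NfaceP _ _ jC' j) _.
    rewrite !Ngain_shift kS (negbTE NS) mulr0 mulr1.
    by move: ek; rewrite /Nslack; lra.
  have [_ _ kC] := back_vertex _ _ _ (best_basisP w).1 iA' kC' GB0'.
  by move/eqP: dis => /setP /(_ k); rewrite in_setI kC kS in_set0.
- have mB : max_basis BB (wf w') B.
    split=> // B' inB'; apply: le_trans (mB'.2 _ inB') _.
    by rewrite !wsum_shift; move: eB; rewrite /Bslack /Bdrop natrB ?(ltnW lt) //; lra.
  have [_ GB _] := back_vertex _ _ _ inB iA' jC' (Gpart_max_basis mB).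
  by move: lt; rewrite (eS_inj ((Gw _).1 GB)) ltnn.
Qed.

Lemma top_face_is_top_cell (C : V -> Prop) : top_face C ->
  exists2 X : {set 'I_n}, i0 \in X & forall x, C x <-> top_cell X x.
Proof.
move=> [_ [hmax [w [/cell_byE HC [g0 hg0]]]]].
have eg0 : eS (best_basis w) = g0 by apply/hg0/Gpart_max_basis/best_basisP.
have Gw g : Gpart BB w g <-> g = eS (best_basis w) by rewrite eg0; apply: hg0.
have hmax' C' : cell C' -> subset_pts (cell_pts w) C' ->
    subset_pts C' (cell_pts w).
  by move=> hC' sub x /(hmax _ hC' (fun y hy => sub y ((HC y).1 hy))) /HC.
have /andP [cov meet] : [forall i, (i \in Dface w) || (i \in Nface w)] &&
    (Dface w :&: Nface w != set0).
  apply/negPn/negP => /shift_set_of_not_top [S [k0 [AS CS k0S]]].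
  exact: maximal_cell_no_shift_set hmax' Gw AS CS k0S.
have [X zX eX] := top_cell_of_cover Gw cov meet.
by exists X => // x; rewrite HC.
Qed.

(** * Dawson intervals and intersections of top-degree faces *)

Lemma dawson_top_basis (X : {set 'I_n}) : i0 \in X -> in_dawson R BB (top_basis X) X.
Proof.
move=> zX; have mB := best_basisP (wt X); split.
  move=> i iB nia; apply/negPn/negP => iX; apply: nia => -[j [lt tr]].
  have ij : i != j by apply: contraTneq lt => ->; rewrite ltnn.
  have [_ njB hB'] := (transferE R (top_basis_in X) ij).1 tr.
  have := max_basis_exchange mB iB njB hB'.
  case: (boolP (j \in X)) => jX; first by have := wt_lt_in_out zX jX iX; lra.
  by have := wt_lt_out jX iX lt; lra.
move=> i iX; case: (boolP (i \in top_basis X)) => iB; [by left | right].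
move=> [j [lt tr]].
have ji : j != i by apply: contraTneq lt => ->; rewrite ltnn.
have [jB _ hB'] := (transferE R (top_basis_in X) ji).1 tr.
have := max_basis_exchange mB jB iB hB'.
case: (boolP (j \in X)) => jX; first by have := wt_lt_in jX iX lt; lra.
by have := wt_lt_in_out zX iX jX; lra.
Qed.

(* Greedy uniqueness: the wt X-largest element of the symmetric difference of B
   and top_basis X would give a transfer violating the activity conditions. *)
Lemma dawson_top_basis_uniq (X B : {set 'I_n}) :
  i0 \in X -> B \in BB -> in_dawson R BB B X -> B = top_basis X.
Proof.
move=> zX hB [d1 d2]; set B0 := top_basis X; set w := wt X.
have mB : max_basis BB (wf w) B0 := best_basisP w.
apply/eqP/negPn/negP => ne.
have : (B :\: B0) :|: (B0 :\: B) != set0.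
  apply: contra ne; rewrite setU_eq0 !setD_eq0 => /andP [a b]; apply/eqP/setP.
  by apply/subset_eqP; rewrite a b.
case/set0Pn => e0 he0.
case: (@arg_maxP _ R _ e0 (fun x => x \in (B :\: B0) :|: (B0 :\: B)) (wf w) he0).
move=> e eD emax.
have lt_of x : x \in (B :\: B0) :|: (B0 :\: B) -> x != e -> w 0 x < w 0 e.
  move=> xD xe; rewrite lt_def; apply/andP; split; last exact: emax.
  by apply: contra xe => /eqP /(wt_inj zX) ->.
move: eD; rewrite in_setU => /orP [eB|eB0].
  have [y yD hB'] := dual_basis_exchange hM hB (top_basis_in X) eB.
  move: (yD) (eB); rewrite !inE => /andP [nyB yB0] /andP [neB0 _].
  have := max_basis_exchange mB yB0 neB0 hB'.
  have ye : y != e by apply: contraNneq neB0 => <-.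
  have yD' : y \in (B :\: B0) :|: (B0 :\: B) by rewrite in_setU yD orbT.
  by have := lt_of y yD' ye; lra.
have [x xD hB'] := dual_basis_exchange hM (top_basis_in X) hB eB0.
move: (xD) (eB0); rewrite !inE => /andP [nxB0 xB] /andP [neB eB0'].
have xe : x != e by apply: contraNneq nxB0 => ->.
have xD' : x \in (B :\: B0) :|: (B0 :\: B) by rewrite in_setU xD.
have wlt := lt_of x xD' xe.
have tr : transfer R BB B x e by apply/(transferE R hB xe).
have nia (j : 'I_n) : (j < x)%N -> transfer R BB B x j -> x \in X.
  by move=> lt trj; apply: (d1 _ xB) => H; apply: H; exists j.
case: (boolP (e \in X)) => eX.
  case: (d2 _ eX) => [eBB|ext]; first by rewrite eBB in neB.
  case: (ltngtP x e) => [lxe|lex|/val_inj exe]; last by rewrite exe eqxx in xe.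
    by apply: ext; exists x.
  case: (boolP (x \in X)) => xX; first by have := wt_lt_in eX xX lex; lra.
  by have := nia _ lex tr; rewrite (negbTE xX).
case: (boolP (x \in X)) => xX; first by have := wt_lt_in_out zX xX eX; lra.
case: (ltngtP x e) => [lxe|lex|/val_inj exe]; last by rewrite exe eqxx in xe.
  by have := wt_lt_out xX eX lxe; lra.
by have := nia _ lex tr; rewrite (negbTE xX).
Qed.

Definition face_pts (B S T : {set 'I_n}) := sum_form u t S B (Yset T).

Lemma Yset_sub (T T' : {set 'I_n}) : T' \subset T -> Yset T \subset Yset T'.
Proof.
move=> sT; apply/subsetP => i; rewrite !inE => /orP [iT|->]; last by rewrite orbT.
by rewrite (contra (subsetP sT i) iT).
Qed.

Lemma face_pts_mono (B S T S' T' : {set 'I_n}) x : S \subset S' -> T' \subset T ->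
  face_pts B S T x -> face_pts B S' T' x.
Proof.
move=> sS sT; rewrite /face_pts !sum_formE; apply: mixed_pts_mono => //.
exact: Yset_sub.
Qed.

(* The lifting height of a common point is the same in all the cells. *)
Lemma top_cells_meet (XX : {set {set 'I_n}}) (X1 : {set 'I_n}) x : X1 \in XX ->
  (forall X, X \in XX -> i0 \in X) -> (forall X, X \in XX -> top_cell X x) ->
  (forall X, X \in XX -> top_basis X = top_basis X1) /\
  face_pts (top_basis X1) (\bigcap_(X in XX) X) (\bigcup_(X in XX) X) x.
Proof.
move=> X1in zin hQ.
have hc X : X \in XX -> cell_pts (wt X) x.
  by move=> hX; apply/(cell_pts_wt _ (zin _ hX)); apply: hQ.
have [h1 l1] := hc _ X1in.
have lowX X : X \in XX -> lower_set (wt X) (x, h1).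
  move=> hX; have [hX' lX] := hc _ hX.
  have c1 := lX.2 _ l1.1; have c2 := l1.2 _ lX.1.
  move: c1 c2; rewrite /lfun /= => c1 c2.
  by have -> : h1 = hX' by lra.
have [a [b [g [hd [ex eh]]]]] := (LiftE _).1 l1.1.
have supp X : X \in XX -> [/\ forall i, a i != 0 -> i \in X, g = eS (top_basis X) &
    forall j, b j != 0 -> j \in Yset X].
  move=> hX; have := (lower_setE _ _).1 (lowX _ hX); rewrite ex eh => -[_ ef].
  have [ha hg hb] := lower_set_supp hd ef.
  split; [by move=> i /ha; rewrite Dface_wt ?zin | by apply/(Gpart_wt _ (zin _ hX)) |].
  by move=> j /hb; rewrite Nface_wt ?zin.
have eB X : X \in XX -> top_basis X = top_basis X1.
  by move=> hX; apply: (@eS_inj R); have [_ <- _] := supp _ hX; have [_ <- _] := supp _ X1in.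
split=> //; rewrite /face_pts sum_formE; exists a, b, g.
case: hd => [[a0 a1] [b0 b1] _]; split=> //.
- split=> // i iS; apply/eqP/negPn/negP => ai; move/negP: iS; apply.
  by apply/bigcapP => X hX; have [H _ _] := supp _ hX; apply: H.
- split=> // i iY; apply/eqP/negPn/negP => bi; move/negP: iY; apply.
  rewrite inE; case: (eqVneq i i0) => [_|ne]; first by rewrite orbT.
  rewrite orbF; apply/bigcupP => -[X hX iX].
  by have [_ _ H] := supp _ hX; move: (H _ bi); rewrite inE iX (negbTE ne).
- by have [_ -> _] := supp _ X1in.
Qed.

Definition const_basis (B S T : {set 'I_n}) :=
  [/\ B \in BB, i0 \in S, S \subset T &
      forall X : {set 'I_n}, S \subset X -> X \subset T -> top_basis X = B].

Lemma face_pts_sub (B S T B' S' T' : {set 'I_n}) :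
  const_basis B S T -> const_basis B' S' T' ->
  (forall x, face_pts B S T x -> face_pts B' S' T' x) ->
  [/\ B = B', S \subset S' & T' \subset T].
Proof.
move=> [hB zS sST vB] [hB' zS' sST' vB'] sub.
have key i j : i \in S -> j \in Yset T -> [/\ i \in S', B = B' & j \in Yset T'].
  move=> iS jY; have p := sub _ (sum_form_vertex B iS jY).
  have zT' : i0 \in T' by apply: (subsetP sST').
  have q1 : top_cell S' (vertex_pt i B j).
    by rewrite /top_cell (vB' S' (subxx _) sST'); apply: face_pts_mono (subxx _) sST' p.
  have q2 : top_cell T' (vertex_pt i B j).
    by rewrite /top_cell (vB' T' sST' (subxx _)); apply: face_pts_mono sST' (subxx _) p.
  have Gs : Gpart BB (wt S) (eS B) by apply/(Gpart_wt _ zS); rewrite (vB S (subxx _) sST).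
  have iA : i \in Dface (wt S) by rewrite Dface_wt.
  have jC : j \in Nface (wt S) by rewrite Nface_wt //; apply: (subsetP (Yset_sub sST)).
  have [i1 g1 _] := cell_pts_vertex hB iA jC Gs ((cell_pts_wt _ zS').2 q1).
  have [_ _ j2] := cell_pts_vertex hB iA jC Gs ((cell_pts_wt _ zT').2 q2).
  split; [by rewrite Dface_wt in i1 | | by rewrite Nface_wt in j2].
  by move: g1 => /(Gpart_wt _ zS') /eS_inj ->; rewrite (vB' S' (subxx _) sST').
have [_ -> _] := key _ _ zS (i0_Yset T).
split=> //; first by apply/subsetP => i iS; have [] := key _ _ iS (i0_Yset T).
apply/subsetP => k kT'; apply/negPn/negP => kT.
have kY : k \in Yset T by rewrite inE kT.
have [_ _] := key _ _ zS kY; rewrite inE kT' /= => /eqP ek.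
by rewrite ek (subsetP sST _ zS) in kT.
Qed.

Lemma Dpt_coord a k : Dpt a 0 k = u * a k.
Proof.
rewrite /Dpt summxE (eq_bigr (fun i => delta k i * (u * a i))) ?sum_delta // => i _.
by rewrite !mxE /delta; ring.
Qed.

Lemma Npt_coord b k : Npt b 0 k = - (t * b k).
Proof.
rewrite /Npt summxE (eq_bigr (fun i => delta k i * - (t * b i))) ?sum_delta // => i _.
by rewrite !mxE /delta; ring.
Qed.

Lemma vertex_pt_coord i B j k :
  vertex_pt i B j 0 k = u * (i == k)%:R + (k \in B)%:R - t * (j == k)%:R.
Proof.
by rewrite /vertex_pt !mxE Dpt_coord Npt_coord eSE /delta (eq_sym k i) (eq_sym k j).
Qed.

Lemma sum_form_coord_le (X B Y : {set 'I_n}) x k : sum_form u t X B Y x ->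
  x 0 k <= u * (k \in X)%:R + (k \in B)%:R.
Proof.
rewrite sum_formE => -[a [b [g [ha hb -> ->]]]].
rewrite !mxE Dpt_coord Npt_coord eSE.
have h1 := distr_le_indicator k ha; have h2 : 0 <= b k by case: hb.
have : u * a k <= u * (k \in X)%:R by rewrite ler_pM2l.
have : 0 <= t * b k by rewrite mulr_ge0 // ltW.
lra.
Qed.

(* Comparing the coordinates off 1 of the vertices of two descriptions of the
   same top cell: with u >= 1, a label change at k is compensated by the bases. *)
Lemma labelled_coord_eq (X0 X B Y : {set 'I_n}) : 1 <= u ->
  i0 \in X0 -> i0 \in X -> i0 \in Y ->
  (forall x, top_cell X0 x <-> sum_form u t X B Y x) ->
  forall k, k != i0 -> ((k \in X0) + (k \in top_basis X0) = (k \in X) + (k \in B))%N.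
Proof.
move=> u_ge1 zX0 zX zY eq k kz.
have vertex_k (Z C W : {set 'I_n}) : i0 \in Z -> i0 \in W ->
    exists2 i, i \in Z & vertex_pt i C i0 0 k = u * (k \in Z)%:R + (k \in C)%:R.
  move=> zZ _; exists (if k \in Z then k else i0); first by case: ifP.
  rewrite vertex_pt_coord (eq_sym i0 k) (negbTE kz) mulr0 subr0.
  by case: ifP => kZ; rewrite ?eqxx // (eq_sym i0 k) (negbTE kz).
have le1 : u * (k \in X0)%:R + (k \in top_basis X0)%:R <= u * (k \in X)%:R + (k \in B)%:R.
  have [i iX0 <-] := vertex_k X0 (top_basis X0) (Yset X0) zX0 (i0_Yset X0).
  exact/sum_form_coord_le/(eq _).1/sum_form_vertex/i0_Yset.
have le2 : u * (k \in X)%:R + (k \in B)%:R <= u * (k \in X0)%:R + (k \in top_basis X0)%:R.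
  have [i iX <-] := vertex_k X B Y zX zY.
  exact/sum_form_coord_le/(eq _).2/sum_form_vertex.
apply/eqP; rewrite -(eqr_nat R) !natrD; apply/eqP; move: le1 le2.
by case: (k \in X0); case: (k \in X); case: (k \in top_basis X0); case: (k \in B);
  rewrite /= ?mulr1 ?mulr0 ?mulr1n ?mulr0n; lra.
Qed.

Lemma labelled_top_cell (X0 X B Y : {set 'I_n}) : 1 <= u -> i0 \in X0 -> B \in BB ->
  X :|: Y = setT -> X :&: Y = [set i | val i == 0%N] ->
  (forall x, top_cell X0 x <-> sum_form u t X B Y x) -> X = X0.
Proof.
move=> u_ge1 zX0 inB eU eI eq.
have : i0 \in X :&: Y by rewrite eI inE.
rewrite in_setI => /andP [zX zY].
have lab := labelled_coord_eq u_ge1 zX0 zX zY eq.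
have mB := best_basisP (wt X0).
apply/eqP/negPn/negP => ne.
have [k kD] : exists k, k \in (X0 :\: X) :|: (X :\: X0).
  apply/set0Pn; apply: contra ne; rewrite setU_eq0 !setD_eq0 => /andP [a b].
  by apply/eqP/setP; apply/subset_eqP; rewrite a b.
have kz : k != i0 by apply: contraTneq kD => ->; rewrite !inE zX zX0.
move: kD; rewrite in_setU !inE => /orP [/andP [nkX kX0]|/andP [nkX0 kX]].
  have /andP [nkB0 kB] : (k \notin top_basis X0) && (k \in B).
    by move: (lab k kz); rewrite kX0 (negbTE nkX); case: (k \in top_basis X0); case: (k \in B).
  have kD : k \in B :\: top_basis X0 by rewrite inE nkB0.
  have [x /setDP [xB0 nxB] hB] := dual_basis_exchange hM inB (top_basis_in X0) kD.
  have := max_basis_exchange mB xB0 nkB0 hB.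
  case: (eqVneq x i0) => [->|xz]; first by have := wt_lt_in zX0 kX0 (i0_lt kz); lra.
  have nxX0 : x \notin X0.
    by move: (lab x xz); rewrite xB0 (negbTE nxB); case: (x \in X0); case: (x \in X).
  by have := wt_lt_in_out zX0 kX0 nxX0; lra.
have /andP [kB0 nkB] : (k \in top_basis X0) && (k \notin B).
  by move: (lab k kz); rewrite kX (negbTE nkX0); case: (k \in top_basis X0); case: (k \in B).
have kD : k \in top_basis X0 :\: B by rewrite inE nkB.
have [b /setDP [bB nbB0] hB] := basis_exchange hM (top_basis_in X0) inB kD.
have := max_basis_exchange mB kB0 nbB0 hB.
case: (eqVneq b i0) => [->|bz]; first by have := wt_lt_in_out zX0 zX0 nkX0; lra.
have bX0 : b \in X0.
  by move: (lab b bz); rewrite bB (negbTE nbB0); case: (b \in X0); case: (b \in X).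
by have := wt_lt_in_out zX0 bX0 nkX0; lra.
Qed.

Definition dawson_lo (B : {set 'I_n}) := [set i | `[< i \in B /\ ~ int_active R BB B i >]].
Definition dawson_hi (B : {set 'I_n}) := [set i | `[< i \in B \/ ext_active R BB B i >]].

Lemma in_dawsonE (B X : {set 'I_n}) :
  in_dawson R BB B X <-> (dawson_lo B \subset X) && (X \subset dawson_hi B).
Proof.
split.
  move=> [d1 d2]; apply/andP; split; apply/subsetP => i.
    by rewrite inE => /asboolP [iB nia]; apply: d1.
  by move=> iX; rewrite inE; apply/asboolP; apply: d2.
case/andP => /subsetP s1 /subsetP s2; split.
  by move=> i iB nia; apply: s1; rewrite inE; apply/asboolP.
by move=> i /s2; rewrite inE => /asboolP.
Qed.

Lemma dawson_lo_sub_hi B : dawson_lo B \subset dawson_hi B.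
Proof. by apply/subsetP => i; rewrite !inE => /asboolP [iB _]; apply/asboolP; left. Qed.

Lemma i0_dawson_hi B : i0 \in dawson_hi B.
Proof. by rewrite inE; apply/asboolP; right => -[b [lt _]]. Qed.

(* The faces of the cube of B: intervals [S, T] of labels inside the Dawson
   interval of B, all containing 1. *)
Definition dawson_face (B S T : {set 'I_n}) :=
  [/\ B \in BB, dawson_lo B :|: [set i0] \subset S, S \subset T & T \subset dawson_hi B].

Lemma dawson_face_const_basis B S T : dawson_face B S T -> const_basis B S T.
Proof.
move=> [hB s1 sST sT]; have zS : i0 \in S by apply: (subsetP s1); rewrite !inE eqxx orbT.
split=> // X sX sXT; apply/esym/dawson_top_basis_uniq => //; first exact: (subsetP sX).
apply/in_dawsonE; apply/andP; split; last exact: subset_trans sT.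
by apply: subset_trans sX; apply: subset_trans s1; apply: subsetUl.
Qed.

Lemma dawson_face_in_P B S T : dawson_face B S T ->
  in_P (face_pts B S T).
Proof.
move=> hv; have [hB zS sST vB] := dawson_face_const_basis hv.
split; last by exists (vertex_pt i0 B i0); apply: sum_form_vertex => //; apply: i0_Yset.
pose XX := [set X : {set 'I_n} | (S \subset X) && (X \subset T)].
exists (fun Q0 => exists2 X, X \in XX & Q0 = top_cell X); split.
- by exists (top_cell S), S => //; rewrite inE subxx.
- move=> Q0 [X]; rewrite inE => /andP [sX _] ->.
  by apply: top_cell_top_face; apply: (subsetP sX).
move=> x; split.
  move=> hx Q0 [X]; rewrite inE => /andP [sX sXT] ->.
  by rewrite /top_cell (vB X sX sXT); apply: face_pts_mono hx.
move=> H; have SXX : S \in XX by rewrite inE subxx sST.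
have zin X : X \in XX -> i0 \in X by rewrite inE => /andP [sX _]; apply: (subsetP sX).
have [eB hR] := top_cells_meet SXX zin (fun X hX => H _ (ex_intro2 _ _ X hX erefl)).
have capS : \bigcap_(X in XX) X = S.
  apply/setP => i; apply/bigcapP/idP => [/(_ _ SXX) //|iS X].
  by rewrite inE => /andP [sX _]; apply: (subsetP sX).
have cupT : \bigcup_(X in XX) X = T.
  apply/setP => i; apply/bigcupP/idP => [[X]|iT]; last by exists T => //; rewrite inE sST subxx.
  by rewrite inE => /andP [_ sXT]; apply: (subsetP sXT).
by rewrite capS cupT (vB S (subxx _) sST) in hR.
Qed.

Lemma in_P_dawson_face (Q : V -> Prop) : in_P Q ->
  exists B S T, dawson_face B S T /\ forall x, Q x <-> face_pts B S T x.
Proof.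
move=> [[fam [[Q1 fQ1] ftop hQ]] [x0 hx0]].
pose XX := [set X : {set 'I_n} |
  `[< i0 \in X /\ exists2 Q0, fam Q0 & forall x, Q0 x <-> top_cell X x >]].
have famX Q0 : fam Q0 -> exists2 X, X \in XX & forall x, Q0 x <-> top_cell X x.
  move=> f0; have [X zX e] := top_face_is_top_cell (ftop _ f0).
  by exists X => //; rewrite inE; apply/asboolP; split => //; exists Q0.
have XXP X : X \in XX -> i0 \in X /\ exists2 Q0, fam Q0 & forall x, Q0 x <-> top_cell X x.
  by rewrite inE => /asboolP.
have hQX x : Q x <-> (forall X, X \in XX -> top_cell X x).
  rewrite hQ; split; first by move=> H X /XXP [_ [Q0 f0 e]]; apply/e; apply: H.
  by move=> H Q0 f0; have [X hX e] := famX _ f0; apply/e; apply: H.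
have [X1 hX1 _] := famX _ fQ1.
have zin X : X \in XX -> i0 \in X by move=> /XXP [].
have [eB _] := top_cells_meet hX1 zin ((hQX x0).1 hx0).
have in_dawson_X X : X \in XX -> (dawson_lo (top_basis X1) \subset X) &&
    (X \subset dawson_hi (top_basis X1)).
  by move=> hX; rewrite -(eB _ hX); apply/in_dawsonE/dawson_top_basis/zin.
exists (top_basis X1), (\bigcap_(X in XX) X), (\bigcup_(X in XX) X); split.
  split; first exact: top_basis_in.
  - apply/subsetP => i; rewrite in_setU in_set1 => /orP [iS|/eqP ->];
      apply/bigcapP => X hX; last exact: zin.
    by case/andP: (in_dawson_X _ hX) => /subsetP /(_ i iS).
  - by apply/subsetP => i /bigcapP /(_ _ hX1) iX; apply/bigcupP; exists X1.
  - apply/subsetP => i /bigcupP [X hX iX].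
    by case/andP: (in_dawson_X _ hX) => _ /subsetP /(_ i iX).
move=> x; split; first by move=> /hQX H; have [_ hR] := top_cells_meet hX1 zin H.
move=> hR; apply/hQX => X hX; rewrite /top_cell (eB _ hX); apply: face_pts_mono hR.
  by apply/subsetP => i /bigcapP; apply.
by apply/subsetP => i iX; apply/bigcupP; exists X.
Qed.

(** * The cube of a Dawson interval *)

Definition free_elts (B : {set 'I_n}) :=
  [set e | [&& e \in dawson_hi B, e \notin dawson_lo B & e != i0]].
Definition cube_dim (B : {set 'I_n}) := #|free_elts B|.

(* Coordinate k of the cube of B records whether the k-th free element of the
   Dawson interval of B lies in S (Some true), in T \ S (None) or outside T
   (Some false). *)
Definition cube_code (B S T : {set 'I_n}) : {ffun 'I_(cube_dim B) -> option bool} :=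
  [ffun k => if enum_val k \in S then Some true
             else if enum_val k \in T then None else Some false].
Definition code_lo (B : {set 'I_n}) (f : {ffun 'I_(cube_dim B) -> option bool}) :=
  dawson_lo B :|: [set i0] :|: ((fun k => enum_val k) @: [set k | f k == Some true]).
Definition code_hi (B : {set 'I_n}) (f : {ffun 'I_(cube_dim B) -> option bool}) :=
  dawson_hi B :\: ((fun k => enum_val k) @: [set k | f k == Some false]).

Lemma free_eltsP B e :
  reflect [/\ e \in dawson_hi B, e \notin dawson_lo B & e != i0] (e \in free_elts B).
Proof. by rewrite [X in reflect _ X]inE; apply: and3P. Qed.

Lemma free_elts_enum B e : e \in free_elts B -> exists k : 'I_(cube_dim B), enum_val k = e.
Proof. by move=> he; exists (enum_rank_in he e); rewrite enum_rankK_in. Qed.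

Lemma in_code_lo B (f : {ffun 'I_(cube_dim B) -> option bool}) k :
  (enum_val k \in code_lo f) = (f k == Some true).
Proof.
have /free_eltsP [_ nS nz] := enum_valP k.
rewrite /code_lo !in_setU in_set1 (negbTE nS) (negbTE nz) /=.
apply/imsetP/idP => [[k' hk' e]|hk]; last by exists k => //; rewrite inE.
by move: hk'; rewrite inE (enum_val_inj e).
Qed.

Lemma in_code_hi B (f : {ffun 'I_(cube_dim B) -> option bool}) k :
  (enum_val k \in code_hi f) = (f k != Some false).
Proof.
have /free_eltsP [hT _ _] := enum_valP k.
rewrite /code_hi in_setD hT andbT; congr negb.
apply/imsetP/idP => [[k' hk' e]|hk]; last by exists k => //; rewrite inE.
by move: hk'; rewrite inE (enum_val_inj e).
Qed.

Lemma cube_codeK B (f : {ffun 'I_(cube_dim B) -> option bool}) :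
  cube_code B (code_lo f) (code_hi f) = f.
Proof.
by apply/ffunP => k; rewrite ffunE in_code_lo in_code_hi; case: (f k) => [[]|].
Qed.

Lemma dawson_face_code B (f : {ffun 'I_(cube_dim B) -> option bool}) :
  B \in BB -> dawson_face B (code_lo f) (code_hi f).
Proof.
move=> hB; split=> //; first exact: subsetUl.
- apply/subsetP => e; rewrite /code_lo !in_setU in_set1 => /orP [/orP [eS|/eqP ->]|].
  + rewrite /code_hi in_setD (subsetP (dawson_lo_sub_hi B) _ eS) andbT.
    apply/imsetP => -[k _ ek]; have /free_eltsP [_ nS _] := enum_valP k.
    by rewrite -ek eS in nS.
  + rewrite /code_hi in_setD i0_dawson_hi andbT.
    apply/imsetP => -[k _ ek]; have /free_eltsP [_ _ nz] := enum_valP k.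
    by rewrite -ek eqxx in nz.
  + by move=> /imsetP [k hk ->]; rewrite in_code_hi; move: hk; rewrite inE => /eqP ->.
- by apply/subsetP => e; rewrite /code_hi in_setD => /andP [].
Qed.

Lemma free_elts_notin (B S : {set 'I_n}) e : dawson_lo B :|: [set i0] \subset S ->
  e \in dawson_hi B -> e \notin S -> e \in free_elts B.
Proof.
move=> s1 eT eS; apply/free_eltsP; split=> //.
  by apply: contra eS => h; apply: (subsetP s1); rewrite in_setU h.
by apply: contraNneq eS => ->; apply: (subsetP s1); rewrite !inE eqxx orbT.
Qed.

Lemma cube_face_sub_code B S T S' T' : dawson_face B S T -> dawson_face B S' T' ->
  (cube_face_sub (cube_code B S' T') (cube_code B S T) <->
   (S \subset S') && (T' \subset T)).
Proof.
move=> hv hv'; have [_ s1 sST sT] := hv; have [_ s1' sST' sT'] := hv'.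
split; last first.
  case/andP => sS sT0 k; rewrite !ffunE.
  case: ifP => eS; first by rewrite (subsetP sS _ eS); right.
  case: ifP => eT; first by left.
  right; have eT' : enum_val k \notin T' by apply: contra (negbT eT); apply: (subsetP sT0).
  rewrite (negbTE eT'); case: ifP => // eS'.
  by have := subsetP sST' _ eS'; rewrite (negbTE eT').
move=> H; apply/andP; split.
  apply/subsetP => e eS.
  case: (boolP (e \in dawson_lo B :|: [set i0])) => [h|h]; first exact: (subsetP s1').
  have eF : e \in free_elts B.
    apply/free_eltsP; move: h; rewrite in_setU in_set1 negb_or => /andP [-> ->].
    by split=> //; apply: (subsetP sT); apply: (subsetP sST).
  have [k ek] := free_elts_enum eF; have := H k; rewrite !ffunE ek eS.
  by case=> // /eqP; case: (e \in S') => //; case: (e \in T').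
apply/subsetP => e eT'; apply/negPn/negP => eT.
have eS : e \notin S by apply: contra eT; apply: (subsetP sST).
have [k ek] := free_elts_enum (free_elts_notin s1 (subsetP sT' _ eT') eS).
have := H k; rewrite !ffunE ek (negbTE eS) (negbTE eT) eT'.
by case=> // /eqP; case: (e \in S').
Qed.

Lemma cube_vertex_code B S T : dawson_face B S T -> (cube_vertex (cube_code B S T) <-> S = T).
Proof.
move=> hv; have [_ s1 sST sT] := hv; split; last by move=> <- k; rewrite ffunE; do !case: ifP.
move=> H; apply/eqP; rewrite eqEsubset sST /=; apply/subsetP => e eT.
apply/negPn/negP => eS; have [k ek] := free_elts_enum (free_elts_notin s1 (subsetP sT _ eT) eS).
by have := H k; rewrite ffunE ek (negbTE eS) eT.
Qed.

Definition face_param (Q : V -> Prop) (B S T : {set 'I_n}) :=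
  dawson_face B S T /\ forall x, Q x <-> face_pts B S T x.

Lemma face_param_uniq Q B S T B' S' T' :
  face_param Q B S T -> face_param Q B' S' T' -> [/\ B = B', S = S' & T = T'].
Proof.
move=> [/dawson_face_const_basis hv eq] [/dawson_face_const_basis hv' eq'].
have [-> a1 b1] := face_pts_sub hv hv' (fun x h => (eq' x).1 ((eq x).2 h)).
have [_ a2 b2] := face_pts_sub hv' hv (fun x h => (eq x).1 ((eq' x).2 h)).
by split=> //; apply/eqP; rewrite eqEsubset ?a1 ?a2 ?b1 ?b2.
Qed.

(* The value for a point set outside the poset P is irrelevant. *)
Definition face_code (Q : V -> Prop) : {B : {set 'I_n} & {ffun 'I_(cube_dim B) -> option bool}} :=
  match pselect (exists p : {set 'I_n} * {set 'I_n} * {set 'I_n}, face_param Q p.1.1 p.1.2 p.2) with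
  | left h => let p := proj1_sig (cid h) in existT _ p.1.1 (cube_code p.1.1 p.1.2 p.2)
  | right _ => existT _ set0 [ffun _ => None]
  end.

Lemma face_codeE Q B S T : face_param Q B S T -> face_code Q = existT _ B (cube_code B S T).
Proof.
move=> hp; rewrite /face_code; case: pselect => [h|h]; last by exfalso; apply: h; exists (B, S, T).
by case: (cid h) => -[[B' S'] T'] /= /(face_param_uniq hp) [-> -> ->].
Qed.

Lemma existT_ffun_inj B (f f' : {ffun 'I_(cube_dim B) -> option bool}) :
  existT (fun B => {ffun 'I_(cube_dim B) -> option bool}) B f = existT _ B f' -> f = f'.
Proof. exact: (inj_pair2_eq_dec _ (@eq_comparable _)). Qed.

Lemma face_code_basis Q : in_P Q -> projT1 (face_code Q) \in BB.
Proof. by move=> /in_P_dawson_face [B [S [T hp]]]; rewrite (face_codeE hp); case: hp.1. Qed.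

Lemma face_code_surj B (f : {ffun 'I_(cube_dim B) -> option bool}) : B \in BB ->
  exists2 Q, in_P Q & face_code Q = existT _ B f.
Proof.
move=> hB; have hv := dawson_face_code f hB.
exists (face_pts B (code_lo f) (code_hi f)); first exact: dawson_face_in_P.
by rewrite (@face_codeE _ B (code_lo f) (code_hi f)) ?cube_codeK.
Qed.

Lemma face_code_sub Q Q' : in_P Q -> in_P Q' ->
  subset_pts Q Q' <->
  exists B (f f' : {ffun 'I_(cube_dim B) -> option bool}),
    [/\ face_code Q = existT _ B f, face_code Q' = existT _ B f' & cube_face_sub f' f].
Proof.
move=> /in_P_dawson_face [B [S [T [hv eq]]]] /in_P_dawson_face [B' [S' [T' [hv' eq']]]].
rewrite (@face_codeE Q B S T) // (@face_codeE Q' B' S' T') //; split.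
  move=> sub; have [eB sS sT] := face_pts_sub (dawson_face_const_basis hv)
    (dawson_face_const_basis hv') (fun x h => (eq' x).1 (sub x ((eq x).2 h))).
  subst B'; exists B, (cube_code B S T), (cube_code B S' T'); split=> //.
  by apply/(cube_face_sub_code hv hv'); rewrite sS sT.
move=> [B0 [f [f' [e1 e2 cf]]]].
have eB : B = B0 := congr1 (@projT1 _ _) e1.
have eB' : B' = B0 := congr1 (@projT1 _ _) e2.
subst B0 B'; move: e1 e2 => /existT_ffun_inj ef /existT_ffun_inj ef'; subst f f'.
have /andP [sS sT] := (cube_face_sub_code hv hv').1 cf.
by move=> x /eq hx; apply/eq'; apply: face_pts_mono hx.
Qed.

Lemma Yset_partition (S : {set 'I_n}) : i0 \in S ->
  S :|: Yset S = setT /\ S :&: Yset S = [set i | val i == 0%N].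
Proof.
move=> zS; split; apply/setP => i; rewrite !inE; first by case: (i \in S).
have -> : (val i == 0%N) = (i == i0) by [].
by case: (eqVneq i i0) => [->|ne]; rewrite ?zS ?orbT //= orbF; case: (i \in S).
Qed.

Lemma top_face_code_vertex (Q : V -> Prop) B : 1 <= u -> B \in BB ->
  top_face Q ->
  (exists X, labelled BB u t Q X /\ in_dawson R BB B X) ->
  exists2 v, cube_vertex v & face_code Q = existT _ B v.
Proof.
move=> u_ge1 hB htf [X [[B' [Y [hB' eU eI eq']]] hd]].
have [X0 zX0 eQ] := top_face_is_top_cell htf.
have eX := labelled_top_cell u_ge1 zX0 hB' eU eI (fun x => iff_trans (iff_sym (eQ x)) (eq' x)).
subst X; have eB := dawson_top_basis_uniq zX0 hB hd.
have /andP [s1 s2] := (in_dawsonE B X0).1 hd.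
have hv : dawson_face B X0 X0.
  split=> //; apply/subsetP => i; rewrite in_setU in_set1 => /orP [h|/eqP ->] //.
  exact: (subsetP s1).
exists (cube_code B X0 X0); first exact/(cube_vertex_code hv).
by apply: face_codeE; split=> // x; rewrite eQ /top_cell -eB.
Qed.

Lemma code_vertex_top_face (Q : V -> Prop) B : in_P Q ->
  (exists2 v, cube_vertex v & face_code Q = existT _ B v) ->
  top_face Q /\ exists X, labelled BB u t Q X /\ in_dawson R BB B X.
Proof.
move=> hQ [v cv ev]; have [B1 [S [T [hv eq]]]] := in_P_dawson_face hQ.
rewrite (@face_codeE Q B1 S T) // in ev.
have eB : B1 = B := congr1 (@projT1 _ _) ev.
subst B1; have ef := existT_ffun_inj ev; subst v.
have eST := (cube_vertex_code hv).1 cv; subst T.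
have [hB zS _ vB] := dawson_face_const_basis hv.
have eQ : Q = top_cell S.
  by apply: funext => x; apply: propext; rewrite eq /top_cell (vB S (subxx _) (subxx _)).
split; first by rewrite eQ; apply: top_cell_top_face.
exists S; split.
  by exists B, (Yset S); have [eU eI] := Yset_partition zS; split=> // x; rewrite eq.
have [_ s1 _ s2] := hv; apply/in_dawsonE; rewrite s2 andbT.
by apply: subset_trans s1; apply: subsetUl.
Qed.

Lemma face_code_vertex (Q : V -> Prop) B : 1 <= u ->
  in_P Q -> B \in BB ->
  (top_face Q /\ exists X, labelled BB u t Q X /\ in_dawson R BB B X) <->
  exists2 v, cube_vertex v & face_code Q = existT _ B v.
Proof.
move=> u_ge1 hQ hB; split; last exact: code_vertex_top_face.
by case; apply: top_face_code_vertex.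
Qed.

End Subdivision.


Theorem mainTheorem11 (R : realFieldType) (n : nat) (n_gt0 : (0 < n)%N)
  (BB : {set {set 'I_n}}) (hM : matroid_bases BB)
  (t u : nat) (t_gt0 : (0 < t)%N) (u_gt0 : (0 < u)%N)
  (alpha beta : 'I_n -> R)
  (alpha_pos : forall i, 0 < alpha i)
  (alpha_incr : forall i j : 'I_n, (i < j)%N -> alpha i < alpha j)
  (beta_pos : forall i, 0 < beta i)
  (beta_incr : forall i j : 'I_n, (i < j)%N -> beta i < beta j) :
  let uR : R := u%:R in
  let tR : R := t%:R in
  exists (d : {set 'I_n} -> nat)
         (phi : ('rV[R]_n -> Prop) ->
                {B : {set 'I_n} & {ffun 'I_(d B) -> option bool}}),
    [/\ forall Q, in_P BB alpha beta uR tR Q -> projT1 (phi Q) \in BB,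
        forall B, B \in BB -> forall f : {ffun 'I_(d B) -> option bool},
          exists2 Q, in_P BB alpha beta uR tR Q & phi Q = existT _ B f,
        forall Q Q', in_P BB alpha beta uR tR Q -> in_P BB alpha beta uR tR Q' ->
          (subset_pts Q Q' <->
           exists B (f f' : {ffun 'I_(d B) -> option bool}),
             [/\ phi Q = existT _ B f, phi Q' = existT _ B f' &
                 cube_face_sub f' f]) &
        forall Q B, in_P BB alpha beta uR tR Q -> B \in BB ->
          ((top_face BB alpha beta uR tR Q /\
            exists X, labelled BB uR tR Q X /\ in_dawson R BB B X) <->
           exists2 v : {ffun 'I_(d B) -> option bool},
             cube_vertex v & phi Q = existT _ B v)].
Proof.
move=> uR tR.
have uR_gt0 : 0 < uR by rewrite ltr0n.
have tR_gt0 : 0 < tR by rewrite ltr0n.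
have uR_ge1 : 1 <= uR by rewrite ler1n.
exists (cube_dim R n_gt0 BB), (face_code n_gt0 BB uR tR); split.
- move=> Q hQ; exact (face_code_basis n_gt0 hM uR_gt0 tR_gt0 alpha_incr beta_incr hQ).
- move=> B hB f; exact (face_code_surj hM uR_gt0 tR_gt0 alpha_incr beta_incr f hB).
- move=> Q Q' hQ hQ'.
  exact (face_code_sub n_gt0 hM uR_gt0 tR_gt0 alpha_incr beta_incr hQ hQ').
- move=> Q B hQ hB.
  exact (face_code_vertex n_gt0 hM uR_gt0 tR_gt0 alpha_incr beta_incr uR_ge1 hQ hB).
Qed.
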